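(* For $j=1,2$ let $\mathscr T_j$ be a leafless, locally finite rooted directed tree with set of branching vertices $V^{(j)}_\prec$, and let $S^{(j)}_{\lambda,1}$ be the Dirichlet shift with parameter $q=1$ on $\mathscr T_j$. Then $S^{(1)}_{\lambda,1}$ is unitarily equivalent to $S^{(2)}_{\lambda,1}$ if and only if $$\sum_{v\in V^{(1)}_\prec}\big(\mathrm{card}(\mathsf{Chi}(v))-1\big)=\sum_{v\in V^{(2)}_\prec}\big(\mathrm{card}(\mathsf{Chi}(v))-1\big)$$ (as cardinal numbers, possibly infinite).
   Context: A directed tree $\mathscr T=(V,\mathcal E)$ is a directed graph with no circuits, connected, in which every non-root vertex has a unique parent; rooted means a unique vertex $\mathsf{root}$ has no parent. $\mathsf{Chi}(v)=\{u:(v,u)\in\mathcal E\}$; $\mathsf{Chi}^{\langle n\rangle}$ denotes the $n$-fold iterate. Locally finite: each $\mathsf{Chi}(v)$ finite; leafless: each $\mathsf{Chi}(v)$ nonempty; $V$ is countably infinite. Depth $n_v$: the unique $n$ with $v\in\mathsf{Chi}^{\langle n\rangle}(\mathsf{root})$. Branching vertices: $V_\prec=\{v:\mathrm{card}(\mathsf{Chi}(v))\geqslant2\}$. The weighted shift on $\ell^2(V)$ (orthonormal basis $\{e_u\}$) with weights $\{\lambda_u\}_{u\neq\mathsf{root}}$ is $S_\lambda e_v=\sum_{u\in\mathsf{Chi}(v)}\lambda_ue_u$. For real $q\geqslant1$ the Dirichlet shift $S_{\lambda,q}$ has weights $\lambda_{u,q}=\frac{1}{\sqrt{\mathrm{card}(\mathsf{Chi}(v))}}\sqrt{\frac{n_v+q}{n_v+1}}$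 for $u\in\mathsf{Chi}(v)$. *)

From Stdlib Require Import Reals List ClassicalEpsilon.
Open Scope R_scope.

Definition C : Type := (R * R)%type.
Definition C0 : C := (0, 0).
Definition Cadd (a b : C) : C := (fst a + fst b, snd a + snd b).
Definition Cmul (a b : C) : C :=
  (fst a * fst b - snd a * snd b, fst a * snd b + snd a * fst b).
Definition RtoC (r : R) : C := (r, 0).
Definition Cnorm2 (a : C) : R := fst a * fst a + snd a * snd a.

(* A rooted directed tree, given by its parent map: par v = Some w iff (w,v)
   is an edge.  Every non-root vertex has a unique parent, the root has none,
   and every vertex is reached from the root (connectedness; this also rules
   out circuits).  The vertex set is countably infinite (standing assumption),
   witnessed by a bijective enumeration. *)
Record rtree : Type := {
  V : Type;
  root : V;
  par : V -> option V;
  par_root : par root = None;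
  par_nonroot : forall v, v <> root -> par v <> None;
  conn : forall v, exists n : nat,
      (fix anc (k : nat) (x : V) : option V :=
         match k with
         | O => Some x
         | S k' => match anc k' x with Some w => par w | None => None end
         end) n v = Some root;
  enum : nat -> V;
  enum_inj : forall m n, enum m = enum n -> m = n;
  enum_surj : forall v, exists n, enum n = v
}.

Fixpoint anc (T : rtree) (k : nat) (x : V T) : option (V T) :=
  match k with
  | O => Some x
  | S k' => match anc T k' x with Some w => par T w | None => None end
  end.

Definition Chi (T : rtree) (v : V T) (u : V T) : Prop := par T u = Some v.

Definition locally_finite (T : rtree) : Prop :=
  forall v, exists l : list (V T), forall u, In u l <-> Chi T v u.

Definition leafless (T : rtree) : Prop :=
  forall v, exists u, Chi T v u.

(* card (Chi v): length of a duplicate-free list enumerating Chi v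
   (well defined when T is locally finite). *)
Definition card_Chi (T : rtree) (v : V T) : nat :=
  length (epsilon (inhabits nil)
            (fun l : list (V T) => NoDup l /\ forall u, In u l <-> Chi T v u)).

Definition depth (T : rtree) (v : V T) : nat :=
  epsilon (inhabits O) (fun n => anc T n v = Some (root T)).

Definition branching (T : rtree) (v : V T) : Prop := (2 <= card_Chi T v)%nat.

(* weight lambda_{u,q} for u in Chi(v) *)
Definition dweight (T : rtree) (q : R) (v : V T) : R :=
  / sqrt (INR (card_Chi T v)) *
  sqrt ((INR (depth T v) + q) / (INR (depth T v) + 1)).

(* S_{lambda,q} acting on functions V -> C:
   (S f)(u) = lambda_u f(parent u), (S f)(root) = 0;
   equivalently S e_v = sum_{u in Chi v} lambda_u e_u. *)
Definition dirichlet_shift (T : rtree) (q : R) (f : V T -> C) (u : V T) : C :=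
  match par T u with
  | None => C0
  | Some v => Cmul (RtoC (dweight T q v)) (f v)
  end.

(* ||f||^2 = l  (sum over V of |f(v)|^2, via the enumeration; terms are
   nonnegative so the order is irrelevant) *)
Definition l2norm2 (T : rtree) (f : V T -> C) (l : R) : Prop :=
  infinite_sum (fun n => Cnorm2 (f (enum T n))) l.

Definition in_l2 (T : rtree) (f : V T -> C) : Prop := exists l, l2norm2 T f l.

Definition unitarily_equivalent (T1 T2 : rtree)
    (A : (V T1 -> C) -> (V T1 -> C)) (B : (V T2 -> C) -> (V T2 -> C)) : Prop :=
  exists U : (V T1 -> C) -> (V T2 -> C),
    (forall f, in_l2 T1 f -> in_l2 T2 (U f)) /\
    (forall (a : C) f g, in_l2 T1 f -> in_l2 T1 g ->
       forall u, U (fun x => Cadd (Cmul a (f x)) (g x)) u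
                 = Cadd (Cmul a (U f u)) (U g u)) /\
    (forall f l, in_l2 T1 f -> l2norm2 T1 f l -> l2norm2 T2 (U f) l) /\
    (forall g, in_l2 T2 g -> exists f, in_l2 T1 f /\ forall u, U f u = g u) /\
    (forall f, in_l2 T1 f -> forall u, U (A f) u = B (U f) u).

(* realised as the disjoint union of sets of size card Chi v - 1 *)
Definition excess (T : rtree) : Type :=
  { p : V T * nat | branching T (fst p) /\ (snd p < card_Chi T (fst p) - 1)%nat }.

Definition same_card (A B : Type) : Prop :=
  exists (f : A -> B) (g : B -> A),
    (forall a, g (f a) = a) /\ (forall b, f (g b) = b).

(* For q = 1 the weights are 1/sqrt(card Chi(v)), so each vertex sends a unit mass
   evenly to its children and the Dirichlet shift S is an isometry mapping level n
   of the tree isometrically into level n + 1.  Its wandering subspace ker S* is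
   spanned by e_root together with, for every branching vertex v, the card Chi(v) - 1
   Helmert vectors on Chi(v) (unit vectors orthogonal to the constants), and the
   translates S^n of these vectors form an orthonormal basis of l^2(V): S is a
   unilateral shift of multiplicity 1 + sum_v (card Chi(v) - 1).

   Hence a bijection between the "excess" sets, extended by matching the root vectors,
   yields a unitary intertwiner.  Conversely a unitary intertwiner maps ker S*_1 onto
   ker S*_2, so orthonormal families of wandering vectors move between the trees; by
   Bessel's inequality in the finite-dimensional wandering space they cannot be longer
   than its dimension, which forces equal finite cardinalities, while two infinite
   excess sets are both in bijection with nat since V is countable. *)

From Stdlib Require Import Reals Lra Lia List Classical ClassicalEpsilon FunctionalExtensionality ProofIrrelevance Wf_nat FinFun.
Import ListNotations.
Open Scope R_scope.

(** * Finite sums *)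

Definition eq_dec_classic {A} (x y : A) : {x = y} + {x <> y} := excluded_middle_informative (x = y).

Definition delta {A} (x y : A) : R := if eq_dec_classic x y then 1 else 0.

Lemma delta_refl {A} (x : A) : delta x x = 1.
Proof. unfold delta. destruct (eq_dec_classic x x); congruence. Qed.

Lemma delta_neq {A} (x y : A) : x <> y -> delta x y = 0.
Proof. intros H. unfold delta. destruct (eq_dec_classic x y); tauto. Qed.

Lemma delta_iff {A B} (x y : A) (x' y' : B) : (x = y <-> x' = y') -> delta x y = delta x' y'.
Proof. intros H. unfold delta. destruct (eq_dec_classic x y), (eq_dec_classic x' y'); tauto. Qed.

Definition lsum {A} (f : A -> R) (l : list A) : R := fold_right (fun x s => f x + s) 0 l.

Lemma lsum_cons {A} (f : A -> R) a l : lsum f (a :: l) = f a + lsum f l.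
Proof. reflexivity. Qed.

Lemma lsum_app {A} (f : A -> R) l1 l2 : lsum f (l1 ++ l2) = lsum f l1 + lsum f l2.
Proof. induction l1 as [|a l1 IH]; cbn -[lsum]; [cbn; lra|]. rewrite !lsum_cons, IH. lra. Qed.

Lemma lsum_ext {A} (f g : A -> R) l : (forall x, In x l -> f x = g x) -> lsum f l = lsum g l.
Proof.
  induction l as [|a l IH]; intros H; [reflexivity|].
  rewrite !lsum_cons, (H a), IH; [reflexivity| |left; auto]. intros x Hx; apply H; right; auto.
Qed.

Lemma lsum_plus {A} (f g : A -> R) l : lsum (fun x => f x + g x) l = lsum f l + lsum g l.
Proof. induction l as [|a l IH]; [cbn; lra|]. rewrite !lsum_cons, IH. lra. Qed.

Lemma lsum_minus {A} (f g : A -> R) l : lsum (fun x => f x - g x) l = lsum f l - lsum g l.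
Proof. induction l as [|a l IH]; [cbn; lra|]. rewrite !lsum_cons, IH. lra. Qed.

Lemma lsum_scal {A} (c : R) (f : A -> R) l : lsum (fun x => c * f x) l = c * lsum f l.
Proof. induction l as [|a l IH]; [cbn; lra|]. rewrite !lsum_cons, IH. lra. Qed.

Lemma lsum_scalr {A} (c : R) (f : A -> R) l : lsum (fun x => f x * c) l = lsum f l * c.
Proof. induction l as [|a l IH]; [cbn; lra|]. rewrite !lsum_cons, IH. lra. Qed.

Lemma lsum_const {A} (c : R) (l : list A) : lsum (fun _ => c) l = INR (length l) * c.
Proof. induction l as [|a l IH]; [cbn; lra|]. rewrite lsum_cons, IH, length_cons, S_INR. lra. Qed.

Lemma lsum_zero {A} (f : A -> R) l : (forall x, In x l -> f x = 0) -> lsum f l = 0.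
Proof. intros H. rewrite (lsum_ext f (fun _ => 0)) by auto. rewrite lsum_const. lra. Qed.

Lemma lsum_map {A B} (f : B -> R) (g : A -> B) l : lsum f (map g l) = lsum (fun x => f (g x)) l.
Proof. induction l as [|a l IH]; [reflexivity|]. cbn [map]. rewrite !lsum_cons, IH. reflexivity. Qed.

Lemma lsum_flat_map {A B} (f : B -> R) (g : A -> list B) l :
  lsum f (flat_map g l) = lsum (fun x => lsum f (g x)) l.
Proof. induction l as [|a l IH]; [reflexivity|]. cbn [flat_map]. rewrite lsum_app, lsum_cons, IH. reflexivity. Qed.

Lemma lsum_nonneg {A} (f : A -> R) l : (forall x, In x l -> 0 <= f x) -> 0 <= lsum f l.
Proof.
  induction l as [|a l IH]; intros H; [cbn; lra|]. rewrite lsum_cons.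
  assert (0 <= f a) by (apply H; left; auto). assert (0 <= lsum f l) by (apply IH; intros; apply H; right; auto). lra.
Qed.

Lemma lsum_le {A} (f g : A -> R) l : (forall x, In x l -> f x <= g x) -> lsum f l <= lsum g l.
Proof.
  intros H. assert (0 <= lsum (fun x => g x - f x) l) by (apply lsum_nonneg; intros x Hx; specialize (H x Hx); lra).
  rewrite lsum_minus in H0. lra.
Qed.

Lemma lsum_swap {A B} (f : A -> B -> R) l1 l2 :
  lsum (fun a => lsum (fun b => f a b) l2) l1 = lsum (fun b => lsum (fun a => f a b) l1) l2.
Proof.
  induction l1 as [|a l1 IH].
  - symmetry. apply lsum_zero. reflexivity.
  - rewrite lsum_cons, IH, <- lsum_plus. reflexivity.
Qed.

Lemma lsum_sq {A} (f : A -> R) l : lsum f l * lsum f l = lsum (fun k => lsum (fun k' => f k * f k') l) l.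
Proof. rewrite <- lsum_scalr. apply lsum_ext. intros k _. rewrite <- lsum_scal. reflexivity. Qed.

Lemma NoDup_remove_classic {A} (a : A) l : NoDup l -> NoDup (remove eq_dec_classic a l).
Proof.
  induction 1 as [|b l Hb Hl IH]; cbn [remove]; [constructor|].
  destruct (eq_dec_classic a b); auto. constructor; auto. intros Hx. apply in_remove in Hx. tauto.
Qed.

Lemma lsum_remove {A} (f : A -> R) (a : A) l : NoDup l -> In a l ->
  lsum f l = f a + lsum f (remove eq_dec_classic a l).
Proof.
  induction 1 as [|b l Hb Hl IH]; intros Hi; [destruct Hi|]. cbn [remove].
  destruct (eq_dec_classic a b) as [e|ne].
  - subst. rewrite notin_remove by auto. reflexivity.
  - destruct Hi as [e|Hi]; [congruence|]. rewrite !lsum_cons, IH by auto. lra.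
Qed.

Lemma lsum_single {A} (g : A -> R) l a : NoDup l -> In a l ->
  (forall x, In x l -> x <> a -> g x = 0) -> lsum g l = g a.
Proof.
  intros Hn Ha H. rewrite (lsum_remove g a l) by auto. rewrite lsum_zero; [ring|].
  intros x Hx. apply in_remove in Hx. apply H; tauto.
Qed.

Lemma lsum_delta {A} (l : list A) d (g : A -> R) : NoDup l -> In d l ->
  lsum (fun d' => delta d d' * g d') l = g d.
Proof.
  intros Hn Hd. rewrite (lsum_single _ _ d); auto.
  - rewrite delta_refl; ring.
  - intros x _ Hx. rewrite delta_neq; auto. ring.
Qed.

Lemma lsum_incl {A} (f : A -> R) l1 l2 : NoDup l1 -> NoDup l2 -> incl l1 l2 ->
  (forall x, In x l2 -> 0 <= f x) -> lsum f l1 <= lsum f l2.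
Proof.
  intros Hn1; revert l2; induction Hn1 as [|a l1 Ha Hn1 IH]; intros l2 Hn2 Hi Hp.
  - apply lsum_nonneg; auto.
  - rewrite lsum_cons, (lsum_remove f a l2) by (auto; apply Hi; left; auto).
    enough (lsum f l1 <= lsum f (remove eq_dec_classic a l2)) by lra.
    apply IH; [apply NoDup_remove_classic; auto| |].
    + intros x Hx. apply in_in_remove; [intros ->; auto|]. apply Hi; right; auto.
    + intros x Hx. apply in_remove in Hx. apply Hp; tauto.
Qed.

Lemma lsum_support {A} (f : A -> R) S l : NoDup S -> NoDup l -> incl S l ->
  (forall x, In x l -> ~ In x S -> f x = 0) -> lsum f l = lsum f S.
Proof.
  intros HS; revert l; induction HS as [|a S Ha HS IH]; intros l Hl Hi H0.
  - apply lsum_zero. intros x Hx; apply H0; auto.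
  - rewrite (lsum_remove f a l), lsum_cons by (auto; apply Hi; left; auto). f_equal. apply IH.
    + apply NoDup_remove_classic; auto.
    + intros x Hx. apply in_in_remove; [intros ->; auto|]. apply Hi; right; auto.
    + intros x Hx Hn. apply in_remove in Hx. apply H0; [tauto|]. intros [e|e]; subst; tauto.
Qed.

Lemma NoDup_flat_map_disjoint {A B} (g : A -> list B) l : NoDup l -> (forall x, In x l -> NoDup (g x)) ->
  (forall x y z, In x l -> In y l -> In z (g x) -> In z (g y) -> x = y) -> NoDup (flat_map g l).
Proof.
  induction 1 as [|a l Ha Hl IH]; intros Hg Hd; cbn [flat_map]; [constructor|].
  apply NoDup_app.
  - apply Hg; left; auto.
  - apply IH; [intros; apply Hg; right; auto|]. intros x y z Hx Hy; apply Hd; right; auto.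
  - intros z Hz Hz'. apply in_flat_map in Hz'. destruct Hz' as [y [Hy Hzy]].
    assert (a = y) by (apply (Hd a y z); auto; [left|right]; auto). subst; tauto.
Qed.

Record exhaustion {X} (A : nat -> list X) : Prop := {
  exhaustion_NoDup : forall N, NoDup (A N);
  exhaustion_incl : forall N, incl (A N) (A (S N));
  exhaustion_cover : forall x, exists N, In x (A N) }.

Lemma exhaustion_le {X} (A : nat -> list X) : exhaustion A -> forall N M, (N <= M)%nat -> incl (A N) (A M).
Proof.
  intros H N M Hl. induction Hl; [apply incl_refl|].
  eapply incl_tran; eauto. apply exhaustion_incl; auto.
Qed.

Lemma exhaustion_absorbs {X} (A : nat -> list X) : exhaustion A -> forall l, exists N, incl l (A N).
Proof.
  intros H l. induction l as [|a l [N HN]]; [exists O; intros x []|].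
  destruct (exhaustion_cover A H a) as [M HM]. exists (max N M). intros x [<-|Hx].
  - apply (exhaustion_le A H M); [lia|auto].
  - apply (exhaustion_le A H N); [lia|auto].
Qed.

Lemma lsum_exhaustion_mono {X} (A : nat -> list X) (g : X -> R) : exhaustion A -> (forall x, 0 <= g x) ->
  forall N M, (N <= M)%nat -> lsum g (A N) <= lsum g (A M).
Proof. intros H Hg N M Hl. apply lsum_incl; auto; try apply exhaustion_NoDup; auto. apply exhaustion_le; auto. Qed.

Lemma Un_cv_nondecreasing_le (u : nat -> R) l : (forall n, u n <= u (S n)) -> Un_cv u l -> forall n, u n <= l.
Proof.
  intros Hm Hc n. destruct (Rle_or_lt (u n) l) as [h|h]; auto. exfalso.
  destruct (Hc (u n - l)) as [N HN]; [lra|].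
  assert (Hk : forall k, u n <= u (k + n)%nat) by (intros k; induction k; cbn; [lra|specialize (Hm (k + n)%nat); lra]).
  specialize (HN (N + n)%nat ltac:(lia)). specialize (Hk N). unfold Rdist in HN. rewrite Rabs_right in HN; lra.
Qed.

Lemma Un_cv_ext_eventually (u v : nat -> R) l : Un_cv u l ->
  (exists N0, forall N, (N >= N0)%nat -> v N = u N) -> Un_cv v l.
Proof.
  intros H [N0 HN] e He. destruct (H e He) as [M HM]. exists (max M N0). intros n Hn.
  rewrite HN by lia. apply HM. lia.
Qed.

Lemma Un_cv_const (c : R) : Un_cv (fun _ => c) c.
Proof. intros e He. exists O. intros. unfold Rdist. rewrite Rminus_diag, Rabs_R0. auto. Qed.

Lemma Un_cv_exhaustion {X} (A B : nat -> list X) (g : X -> R) l :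
  exhaustion A -> exhaustion B -> (forall x, 0 <= g x) ->
  Un_cv (fun N => lsum g (A N)) l -> Un_cv (fun N => lsum g (B N)) l.
Proof.
  intros HA HB Hg Hc.
  assert (Hle : forall N, lsum g (A N) <= l).
  { apply Un_cv_nondecreasing_le; auto. intros; apply lsum_exhaustion_mono; auto. }
  intros e He. destruct (Hc e He) as [N0 HN0]. specialize (HN0 N0 (le_n _)).
  destruct (exhaustion_absorbs B HB (A N0)) as [M0 HM0]. exists M0. intros n Hn.
  destruct (exhaustion_absorbs A HA (B n)) as [M1 HM1].
  assert (lsum g (B n) <= lsum g (A M1)) by (apply lsum_incl; auto; apply exhaustion_NoDup; auto).
  assert (lsum g (A N0) <= lsum g (B M0)) by (apply lsum_incl; auto; apply exhaustion_NoDup; auto).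
  assert (lsum g (B M0) <= lsum g (B n)) by (apply lsum_exhaustion_mono; auto).
  pose proof (Hle M1). pose proof (Hle N0). unfold Rdist in *.
  rewrite Rabs_left1 in HN0 by lra. rewrite Rabs_left1 by lra. lra.
Qed.

Lemma exhaustion_map {X Y} (A : nat -> list X) (phi : X -> Y) (psi : Y -> X) :
  (forall x, psi (phi x) = x) -> (forall y, phi (psi y) = y) -> exhaustion A ->
  exhaustion (fun N => map phi (A N)).
Proof.
  intros H1 H2 HA. constructor.
  - intros N. apply Injective_map_NoDup; [|apply exhaustion_NoDup; auto].
    intros x y e. rewrite <- (H1 x), <- (H1 y), e. auto.
  - intros N y Hy. rewrite in_map_iff in *. destruct Hy as [x [e Hx]]. exists x; split; auto.
    apply exhaustion_incl; auto.
  - intros y. destruct (exhaustion_cover A HA (psi y)) as [N HN]. exists N.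
    rewrite in_map_iff. exists (psi y); auto.
Qed.

Lemma exhaustion_enum {X} (e : nat -> X) : Injective e -> Surjective e ->
  exhaustion (fun N => map e (seq 0 (S N))).
Proof.
  intros Hi Hs. constructor.
  - intros N. apply Injective_map_NoDup; auto. apply seq_NoDup.
  - intros N x Hx. rewrite in_map_iff in *. destruct Hx as [n [e1 Hn]]. exists n; split; auto.
    rewrite in_seq in *. lia.
  - intros x. destruct (Hs x) as [n Hn]. exists n. rewrite in_map_iff. exists n; split; auto.
    rewrite in_seq. lia.
Qed.

Lemma sum_f_R0_lsum (a : nat -> R) N : sum_f_R0 a N = lsum a (seq 0 (S N)).
Proof.
  induction N; [cbn; lra|]. rewrite seq_S, lsum_app, lsum_cons. cbn [sum_f_R0]. rewrite IHN. cbn. lra.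
Qed.

Lemma infinite_sum_exhaustion {X} (e : nat -> X) (g : X -> R) (A : nat -> list X) l :
  Injective e -> Surjective e -> exhaustion A -> (forall x, 0 <= g x) ->
  (infinite_sum (fun n => g (e n)) l <-> Un_cv (fun N => lsum g (A N)) l).
Proof.
  intros Hi Hs HA Hg. pose proof (exhaustion_enum e Hi Hs) as HE.
  assert (Heq : forall N, sum_f_R0 (fun n => g (e n)) N = lsum g (map e (seq 0 (S N))))
    by (intros; rewrite sum_f_R0_lsum, lsum_map; auto).
  unfold infinite_sum. split; intros H.
  - apply (Un_cv_exhaustion _ _ g l HE HA Hg). intros eps Heps. destruct (H eps Heps) as [N HN].
    exists N. intros n Hn. rewrite <- Heq. apply HN; auto.
  - apply (Un_cv_exhaustion _ _ g l HA HE Hg) in H. intros eps Heps. destruct (H eps Heps) as [N HN].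
    exists N. intros n Hn. rewrite Heq. apply HN; auto.
Qed.

(** * Rooted trees and the shift *)

Definition children (T : rtree) (v : V T) : list (V T) :=
  epsilon (inhabits nil) (fun l : list (V T) => NoDup l /\ forall u, In u l <-> Chi T v u).

Lemma card_Chi_children T v : card_Chi T v = length (children T v).
Proof. reflexivity. Qed.

Lemma anc_S_par T n x : anc T (S n) x = match par T x with Some w => anc T n w | None => None end.
Proof.
  induction n; cbn; [destruct (par T x); auto|].
  cbn in IHn. rewrite IHn. destruct (par T x); auto.
Qed.

Lemma anc_conn T v : exists n, anc T n v = Some (root T).
Proof.
  destruct (conn T v) as [n H]. exists n. rewrite <- H. clear H.
  induction n; cbn; [reflexivity|]. cbn in IHn. rewrite IHn. reflexivity.
Qed.

Lemma anc_root_above T n x : anc T n x = Some (root T) -> forall k, anc T (S k + n) x = None.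
Proof.
  intros H k. induction k; cbn in *; [rewrite H; apply par_root|]. rewrite IHk. reflexivity.
Qed.

Lemma anc_root_unique T n m x : anc T n x = Some (root T) -> anc T m x = Some (root T) -> n = m.
Proof.
  intros H1 H2. destruct (Nat.lt_trichotomy n m) as [h|[h|h]]; auto.
  - replace m with (S (m - n - 1) + n)%nat in H2 by lia. rewrite anc_root_above with (n := n) in H2; easy.
  - replace n with (S (n - m - 1) + m)%nat in H1 by lia. rewrite anc_root_above with (n := m) in H1; easy.
Qed.

Lemma depth_spec T x : anc T (depth T x) x = Some (root T).
Proof. unfold depth. apply epsilon_spec. apply anc_conn. Qed.

Lemma depth_unique T x n : anc T n x = Some (root T) -> depth T x = n.
Proof. intros H. eapply anc_root_unique; eauto. apply depth_spec. Qed.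

Lemma depth_root T : depth T (root T) = O.
Proof. apply depth_unique. reflexivity. Qed.

Lemma depth_child T u v : par T u = Some v -> depth T u = S (depth T v).
Proof. intros H. apply depth_unique. rewrite anc_S_par, H. apply depth_spec. Qed.

Lemma par_of_depth_pos T u : depth T u <> O -> exists v, par T u = Some v.
Proof.
  intros H. destruct (par T u) eqn:E; eauto. exfalso. apply H.
  destruct (eq_dec_classic u (root T)) as [->|ne]; [apply depth_root|].
  exfalso. apply (par_nonroot T u ne E).
Qed.

Fixpoint level (T : rtree) (N : nat) : list (V T) :=
  match N with O => [root T] | S N' => flat_map (children T) (level T N') end.

Lemma lsum_level_S T (h : V T -> R) N :
  lsum h (level T (S N)) = lsum (fun v => lsum h (children T v)) (level T N).
Proof. apply lsum_flat_map. Qed.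

Definition levels_upto (T : rtree) (N : nat) : list (V T) := flat_map (level T) (seq 0 (S N)).

Lemma lsum_levels_upto T (h : V T -> R) N :
  lsum h (levels_upto T N) = lsum (fun n => lsum h (level T n)) (seq 0 (S N)).
Proof. apply lsum_flat_map. Qed.

Section LocallyFinite.

Variables (T : rtree) (Hlf : locally_finite T).

Lemma children_spec v : NoDup (children T v) /\ forall u, In u (children T v) <-> par T u = Some v.
Proof.
  unfold children. apply epsilon_spec. destruct (Hlf v) as [l Hl].
  exists (nodup eq_dec_classic l). split; [apply NoDup_nodup|]. intros u. rewrite nodup_In. apply Hl.
Qed.

Lemma children_NoDup v : NoDup (children T v).
Proof. apply children_spec. Qed.

Lemma In_children v u : In u (children T v) <-> par T u = Some v.
Proof. apply children_spec. Qed.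

Lemma In_level N x : In x (level T N) <-> depth T x = N.
Proof.
  revert x; induction N; intros x; cbn [level].
  - split; [intros [<-|[]]; apply depth_root|].
    intros H. left. pose proof (depth_spec T x) as D. rewrite H in D. cbn in D. congruence.
  - rewrite in_flat_map. split.
    + intros [v [Hv Hx]]. apply IHN in Hv. apply In_children, depth_child in Hx. lia.
    + intros H. destruct (par_of_depth_pos T x) as [v Hv]; [lia|]. exists v. split.
      * apply IHN. apply depth_child in Hv. lia.
      * apply In_children; auto.
Qed.

Lemma level_NoDup N : NoDup (level T N).
Proof.
  induction N; cbn [level]; [repeat constructor; auto|].
  apply NoDup_flat_map_disjoint; auto; [intros; apply children_NoDup|].
  intros x y z _ _ Hx Hy. apply In_children in Hx, Hy. congruence.
Qed.

Lemma levels_upto_exhaustion : exhaustion (levels_upto T).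
Proof.
  constructor.
  - intros N. apply NoDup_flat_map_disjoint; [apply seq_NoDup|intros; apply level_NoDup|].
    intros x y z _ _ Hx Hy. apply In_level in Hx, Hy. congruence.
  - intros N x. unfold levels_upto. rewrite !in_flat_map. intros [n [Hn Hx]]. exists n.
    rewrite in_seq in *. split; [lia|auto].
  - intros x. exists (depth T x). unfold levels_upto. rewrite in_flat_map. exists (depth T x).
    rewrite in_seq, In_level. split; [lia|auto].
Qed.

Lemma lsum_levels_upto_level (g : V T -> R) L N : (forall x, depth T x <> L -> g x = 0) -> (L <= N)%nat ->
  lsum g (levels_upto T N) = lsum g (level T L).
Proof.
  intros Hg HL. rewrite lsum_levels_upto. rewrite (lsum_single _ _ L); auto.
  - apply seq_NoDup.
  - apply in_seq; lia.
  - intros n _ Hn. apply lsum_zero. intros x Hx. apply In_level in Hx. apply Hg. lia.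
Qed.

Hypothesis Hll : leafless T.

Lemma card_Chi_pos v : (1 <= card_Chi T v)%nat.
Proof.
  rewrite card_Chi_children. destruct (Hll v) as [u Hu]. apply In_children in Hu.
  destruct (children T v); [destruct Hu|]. cbn; lia.
Qed.

Lemma sqrt_card_Chi v :
  sqrt (INR (card_Chi T v)) * sqrt (INR (card_Chi T v)) = INR (card_Chi T v) /\ 0 < sqrt (INR (card_Chi T v)).
Proof.
  pose proof (le_INR _ _ (card_Chi_pos v)). cbn in H. split.
  - apply sqrt_sqrt; lra.
  - apply sqrt_lt_R0; lra.
Qed.

End LocallyFinite.

Definition rshift (T : rtree) (f : V T -> R) (u : V T) : R :=
  match par T u with None => 0 | Some v => f v / sqrt (INR (card_Chi T v)) end.

Definition radjoint (T : rtree) (f : V T -> R) (v : V T) : R :=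
  lsum f (children T v) / sqrt (INR (card_Chi T v)).

Definition re_part {T} (f : V T -> C) : V T -> R := fun x => fst (f x).
Definition im_part {T} (f : V T -> C) : V T -> R := fun x => snd (f x).
Definition of_real {T} (h : V T -> R) : V T -> C := fun x => (h x, 0).

Lemma re_part_comb T (a : C) (h f : V T -> C) :
  re_part (fun x => Cadd (Cmul a (h x)) (f x)) = (fun x => fst a * re_part h x + (- snd a) * im_part h x + re_part f x).
Proof. extensionality x. unfold re_part, im_part, Cadd, Cmul. cbn. ring. Qed.

Lemma im_part_comb T (a : C) (h f : V T -> C) :
  im_part (fun x => Cadd (Cmul a (h x)) (f x)) = (fun x => fst a * im_part h x + snd a * re_part h x + im_part f x).
Proof. extensionality x. unfold re_part, im_part, Cadd, Cmul. cbn. ring. Qed.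

Lemma dweight_1 T v : dweight T 1 v = / sqrt (INR (card_Chi T v)).
Proof.
  unfold dweight. replace ((INR (depth T v) + 1) / (INR (depth T v) + 1)) with 1.
  - rewrite sqrt_1. ring.
  - field. pose proof (pos_INR (depth T v)). lra.
Qed.

Lemma re_part_dirichlet_shift T f : re_part (dirichlet_shift T 1 f) = rshift T (re_part f).
Proof.
  extensionality u. unfold re_part, dirichlet_shift, rshift. destruct (par T u); cbn; auto.
  rewrite dweight_1. unfold Rdiv. ring.
Qed.

Lemma im_part_dirichlet_shift T f : im_part (dirichlet_shift T 1 f) = rshift T (im_part f).
Proof.
  extensionality u. unfold im_part, dirichlet_shift, rshift. destruct (par T u); cbn; auto.
  rewrite dweight_1. unfold Rdiv. ring.
Qed.

Lemma dirichlet_shift_of_real T (h : V T -> R) : dirichlet_shift T 1 (of_real h) = of_real (rshift T h).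
Proof.
  extensionality u. unfold dirichlet_shift, of_real, rshift. destruct (par T u); [|reflexivity].
  rewrite dweight_1. unfold Cmul, RtoC. cbn. f_equal; unfold Rdiv; ring.
Qed.

Section Shift.

Variables (T : rtree) (Hlf : locally_finite T).

Lemma lsum_mul_rshift f h N :
  lsum (fun x => f x * rshift T h x) (level T (S N)) = lsum (fun v => radjoint T f v * h v) (level T N).
Proof.
  rewrite lsum_level_S. apply lsum_ext. intros v _. unfold radjoint.
  rewrite (lsum_ext _ (fun u => f u * (h v / sqrt (INR (card_Chi T v))))).
  - rewrite lsum_scalr. unfold Rdiv. ring.
  - intros u Hu. apply (In_children T Hlf) in Hu. unfold rshift. rewrite Hu. auto.
Qed.

Hypothesis Hll : leafless T.

Lemma radjoint_rshift f v : radjoint T (rshift T f) v = f v.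
Proof.
  unfold radjoint. rewrite (lsum_ext _ (fun _ => f v / sqrt (INR (card_Chi T v)))).
  - rewrite lsum_const, <- card_Chi_children. destruct (sqrt_card_Chi T Hlf Hll v) as [Hs Hp].
    set (s := sqrt (INR (card_Chi T v))) in *. rewrite <- Hs. field. lra.
  - intros u Hu. apply (In_children T Hlf) in Hu. unfold rshift. rewrite Hu. auto.
Qed.

Lemma lsum_rshift_mul_rshift f g N :
  lsum (fun x => rshift T f x * rshift T g x) (level T (S N)) = lsum (fun v => f v * g v) (level T N).
Proof.
  rewrite lsum_mul_rshift. apply lsum_ext. intros v _. rewrite radjoint_rshift. reflexivity.
Qed.

End Shift.

(** * Helmert vectors *)

Definition nsum (f : nat -> R) (k : nat) : R := lsum f (seq 0 k).

Lemma nsum_S f k : nsum f (S k) = nsum f k + f k.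
Proof. unfold nsum. rewrite seq_S, lsum_app, lsum_cons. cbn. lra. Qed.

Lemma nsum_shift f n : nsum f (S n) = f O + nsum (fun p => f (S p)) n.
Proof. unfold nsum. cbn [seq]. rewrite lsum_cons, <- seq_shift, lsum_map. auto. Qed.

Lemma nsum_ext f g k : (forall p, (p < k)%nat -> f p = g p) -> nsum f k = nsum g k.
Proof. intros H. apply lsum_ext. intros p Hp. apply in_seq in Hp. apply H. lia. Qed.

Lemma nsum_const c k : nsum (fun _ => c) k = INR k * c.
Proof. unfold nsum. rewrite lsum_const, length_seq. reflexivity. Qed.

(* [helmert j] is the [j]-th Helmert vector: for [j + 2 <= k] they form, together
   with the constant vector, an orthonormal basis of [R^k]. *)
Definition helmert_scale (j : nat) : R := / sqrt (INR (S j * S (S j))).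
Definition helmert (j p : nat) : R :=
  if Nat.leb p j then helmert_scale j else if Nat.eqb p (S j) then - INR (S j) * helmert_scale j else 0.

Lemma helmert_scale_sq j : helmert_scale j * helmert_scale j = / (INR (S j) * (INR (S j) + 1)).
Proof.
  unfold helmert_scale. rewrite mult_INR, (S_INR (S j)), <- Rinv_mult, sqrt_sqrt; [reflexivity|].
  assert (0 < INR (S j)) by (apply lt_0_INR; lia). nra.
Qed.

Lemma helmert_le j p : (p <= j)%nat -> helmert j p = helmert_scale j.
Proof. intros H. unfold helmert. apply Nat.leb_le in H. rewrite H. auto. Qed.

Lemma helmert_succ j : helmert j (S j) = - INR (S j) * helmert_scale j.
Proof.
  unfold helmert. replace (Nat.leb (S j) j) with false by (symmetry; apply Nat.leb_gt; lia).
  rewrite Nat.eqb_refl. auto.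
Qed.

Lemma helmert_gt j p : (S j < p)%nat -> helmert j p = 0.
Proof.
  intros H. unfold helmert. replace (Nat.leb p j) with false by (symmetry; apply Nat.leb_gt; lia).
  replace (Nat.eqb p (S j)) with false by (symmetry; apply Nat.eqb_neq; lia). auto.
Qed.

Lemma nsum_mul_helmert G j k : (S (S j) <= k)%nat ->
  nsum (fun p => G p * helmert j p) k = helmert_scale j * (nsum G (S j) - INR (S j) * G (S j)).
Proof.
  induction 1.
  - rewrite nsum_S, helmert_succ, (nsum_ext _ (fun p => helmert_scale j * G p)).
    + unfold nsum. rewrite lsum_scal. ring.
    + intros p Hp. rewrite helmert_le by lia. ring.
  - rewrite nsum_S, IHle, helmert_gt by lia. ring.
Qed.

Lemma nsum_helmert j k : (S (S j) <= k)%nat -> nsum (helmert j) k = 0.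
Proof.
  intros H. rewrite (nsum_ext _ (fun p => 1 * helmert j p)) by (intros; ring).
  rewrite nsum_mul_helmert, nsum_const by auto. ring.
Qed.

Lemma helmert_orthonormal j j' k : (S (S j) <= k)%nat -> (S (S j') <= k)%nat ->
  nsum (fun p => helmert j p * helmert j' p) k = delta j j'.
Proof.
  assert (Hlt : forall j j', (j < j')%nat -> (S (S j') <= k)%nat -> nsum (fun p => helmert j' p * helmert j p) k = 0).
  { intros a b Hab Hb. rewrite nsum_mul_helmert by lia.
    rewrite (nsum_ext _ (fun _ => helmert_scale b)) by (intros p Hp; apply helmert_le; lia).
    rewrite nsum_const, helmert_le by lia. ring. }
  intros H1 H2. destruct (Nat.lt_trichotomy j j') as [h|[<-|h]].
  - rewrite delta_neq by lia. rewrite (nsum_ext _ (fun p => helmert j' p * helmert j p)) by (intros; ring). auto.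
  - rewrite delta_refl, nsum_mul_helmert by auto.
    rewrite (nsum_ext _ (fun _ => helmert_scale j)) by (intros p Hp; apply helmert_le; lia).
    rewrite nsum_const, helmert_succ.
    pose proof (helmert_scale_sq j) as E. assert (0 < INR (S j)) by (apply lt_0_INR; lia).
    transitivity (helmert_scale j * helmert_scale j * (INR (S j) * (INR (S j) + 1))); [ring|].
    rewrite E. field. nra.
  - rewrite delta_neq by lia. auto.
Qed.

Definition helmert_coef (F : nat -> R) (k j : nat) : R := nsum (fun q => F q * helmert j q) k.

Lemma helmert_coef_indep F j k k' : (S (S j) <= k)%nat -> (S (S j) <= k')%nat ->
  helmert_coef F k j = helmert_coef F k' j.
Proof. intros. unfold helmert_coef. rewrite !nsum_mul_helmert; auto. Qed.

Lemma helmert_parseval F m :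
  nsum (fun p => F p * F p) (S m) =
  nsum F (S m) * nsum F (S m) / INR (S m) + nsum (fun j => helmert_coef F (S m) j * helmert_coef F (S m) j) m.
Proof.
  induction m; [unfold nsum, lsum; cbn; field|].
  rewrite (nsum_S (fun p => F p * F p)), IHm, (nsum_S (fun j => _ * _) m).
  rewrite (nsum_ext (fun j => helmert_coef F (S (S m)) j * _) (fun j => helmert_coef F (S m) j * helmert_coef F (S m) j))
    by (intros p Hp; rewrite (helmert_coef_indep F p (S (S m)) (S m)) by lia; auto).
  assert (Em : helmert_coef F (S (S m)) m = helmert_scale m * (nsum F (S m) - INR (S m) * F (S m)))
    by (apply nsum_mul_helmert; lia).
  rewrite Em, (nsum_S F (S m)).
  set (X := nsum (fun j => helmert_coef F (S m) j * helmert_coef F (S m) j) m).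
  set (s := nsum F (S m)). set (a := F (S m)). pose proof (helmert_scale_sq m) as E.
  replace (helmert_scale m * (s - INR (S m) * a) * (helmert_scale m * (s - INR (S m) * a)))
    with (helmert_scale m * helmert_scale m * ((s - INR (S m) * a) * (s - INR (S m) * a))) by ring.
  rewrite E, (S_INR (S m)). assert (0 < INR (S m)) by (apply lt_0_INR; lia). field. lra.
Qed.

Lemma helmert_expansion F m p : (p < S m)%nat ->
  F p = nsum F (S m) / INR (S m) + nsum (fun j => helmert_coef F (S m) j * helmert j p) m.
Proof.
  revert p. induction m; intros p Hp; [replace p with O by lia; unfold nsum, lsum; cbn; field|].
  rewrite (nsum_S (fun j => _ * helmert j p) m).
  rewrite (nsum_ext (fun j => helmert_coef F (S (S m)) j * _) (fun j => helmert_coef F (S m) j * helmert j p))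
    by (intros q Hq; rewrite (helmert_coef_indep F q (S (S m)) (S m)) by lia; auto).
  assert (Em : helmert_coef F (S (S m)) m = helmert_scale m * (nsum F (S m) - INR (S m) * F (S m)))
    by (apply nsum_mul_helmert; lia).
  rewrite Em, (nsum_S F (S m)), (S_INR (S m)).
  pose proof (helmert_scale_sq m) as E. assert (0 < INR (S m)) by (apply lt_0_INR; lia).
  destruct (Nat.eq_dec p (S m)) as [->|ne].
  - rewrite helmert_succ.
    rewrite (nsum_ext (fun j => helmert_coef F (S m) j * helmert j (S m)) (fun _ => 0))
      by (intros q Hq; rewrite helmert_gt by lia; ring).
    rewrite nsum_const.
    replace (helmert_scale m * (nsum F (S m) - INR (S m) * F (S m)) * (- INR (S m) * helmert_scale m))
      with (- INR (S m) * (helmert_scale m * helmert_scale m) * (nsum F (S m) - INR (S m) * F (S m))) by ring.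
    rewrite E. field. lra.
  - rewrite (IHm p) at 1 by lia. rewrite helmert_le by lia.
    replace (helmert_scale m * (nsum F (S m) - INR (S m) * F (S m)) * helmert_scale m)
      with ((helmert_scale m * helmert_scale m) * (nsum F (S m) - INR (S m) * F (S m))) by ring.
    rewrite E. field. lra.
Qed.

Fixpoint pos {A} (x : A) (l : list A) : nat :=
  match l with [] => O | y :: l' => if eq_dec_classic x y then O else S (pos x l') end.

Lemma lsum_pos {A} (phi : A -> nat -> R) (l : list A) (d : A) : NoDup l ->
  lsum (fun u => phi u (pos u l)) l = nsum (fun p => phi (nth p l d) p) (length l).
Proof.
  intros Hn; revert phi; induction Hn as [|a l Ha Hn IH]; intros phi; [reflexivity|].
  rewrite length_cons, nsum_shift, lsum_cons. cbn. destruct (eq_dec_classic a a); [|congruence]. f_equal.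
  rewrite (lsum_ext _ (fun u => phi u (S (pos u l)))).
  - apply (IH (fun u p => phi u (S p))).
  - intros u Hu. destruct (eq_dec_classic u a); [subst; tauto|auto].
Qed.

Lemma nth_pos {A} (l : list A) (d : A) x : In x l -> nth (pos x l) l d = x.
Proof.
  induction l as [|a l IH]; cbn; [tauto|]. intros [e|h]; destruct (eq_dec_classic x a); subst; auto; congruence.
Qed.

Lemma pos_lt_length {A} (l : list A) x : In x l -> (pos x l < length l)%nat.
Proof.
  induction l as [|a l IH]; cbn; [tauto|]. intros [e|h]; destruct (eq_dec_classic x a); subst; try lia; try congruence.
  specialize (IH h). lia.
Qed.

Lemma pos_nth {A} (l : list A) (d : A) p : NoDup l -> (p < length l)%nat -> pos (nth p l d) l = p.
Proof.
  intros Hn Hp. assert (Hi : In (nth p l d) l) by (apply nth_In; auto).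
  apply (proj1 (NoDup_nth l d) Hn); auto using pos_lt_length, nth_pos.
Qed.

Definition excess_vertex {T} (e : excess T) : V T := fst (proj1_sig e).
Definition excess_index {T} (e : excess T) : nat := snd (proj1_sig e).

Lemma excess_eq {T} (e e' : excess T) : excess_vertex e = excess_vertex e' -> excess_index e = excess_index e' -> e = e'.
Proof.
  intros H1 H2. apply eq_sig_hprop; [intros; apply proof_irrelevance|].
  unfold excess_vertex, excess_index in *. destruct (proj1_sig e), (proj1_sig e'). cbn in *; subst; auto.
Qed.

Lemma excess_index_bound {T} (e : excess T) : (S (S (excess_index e)) <= card_Chi T (excess_vertex e))%nat.
Proof. destruct e as [[v j] [H1 H2]]. unfold excess_vertex, excess_index, branching in *; cbn in *. lia. Qed.

Definition mk_excess (T : rtree) (v : V T) (j : nat) : option (excess T) :=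
  match Compare_dec.le_dec 2 (card_Chi T v), Compare_dec.lt_dec j (card_Chi T v - 1) with
  | left h1, left h2 => Some (exist _ (v, j) (conj h1 h2))
  | _, _ => None
  end.

Lemma mk_excess_Some T v j e : mk_excess T v j = Some e -> excess_vertex e = v /\ excess_index e = j.
Proof.
  unfold mk_excess. destruct (Compare_dec.le_dec 2 (card_Chi T v)), (Compare_dec.lt_dec j (card_Chi T v - 1)); try discriminate.
  intros H; inversion H; subst. auto.
Qed.

Lemma mk_excess_exists T v j : (S (S j) <= card_Chi T v)%nat ->
  exists e, mk_excess T v j = Some e /\ excess_vertex e = v /\ excess_index e = j.
Proof.
  intros H. destruct (mk_excess T v j) as [e|] eqn:E; [eauto using mk_excess_Some|].
  unfold mk_excess in E. destruct (Compare_dec.le_dec 2 (card_Chi T v)), (Compare_dec.lt_dec j (card_Chi T v - 1)); try discriminate; lia.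
Qed.

Definition excess_at (T : rtree) (v : V T) : list (excess T) :=
  flat_map (fun j => match mk_excess T v j with Some e => [e] | None => [] end) (seq 0 (card_Chi T v - 1)).

Lemma In_excess_at T v e : In e (excess_at T v) <-> excess_vertex e = v.
Proof.
  unfold excess_at. rewrite in_flat_map. split.
  - intros [j [_ Hj]]. destruct (mk_excess T v j) eqn:E; cbn in Hj; [|tauto].
    destruct Hj as [<-|[]]. apply mk_excess_Some in E. tauto.
  - intros H. exists (excess_index e). pose proof (excess_index_bound e). rewrite H in H0.
    split; [rewrite in_seq; lia|].
    destruct (mk_excess_exists T v (excess_index e)) as [e' [-> [E1 E2]]]; auto.
    left. apply excess_eq; congruence.
Qed.

Lemma excess_at_NoDup T v : NoDup (excess_at T v).
Proof.
  apply NoDup_flat_map_disjoint; [apply seq_NoDup| |].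
  - intros j _. destruct (mk_excess T v j); repeat constructor; auto.
  - intros x y z _ _ Hx Hy.
    destruct (mk_excess T v x) eqn:E1; [|destruct Hx]. destruct (mk_excess T v y) eqn:E2; [|destruct Hy].
    destruct Hx as [<-|[]], Hy as [<-|[]]. apply mk_excess_Some in E1, E2. destruct E1, E2. congruence.
Qed.

Lemma lsum_excess_at T v (g : excess T -> R) (gg : nat -> R) :
  (forall e, excess_vertex e = v -> g e = gg (excess_index e)) -> lsum g (excess_at T v) = nsum gg (card_Chi T v - 1).
Proof.
  intros H. unfold excess_at. rewrite lsum_flat_map. apply lsum_ext. intros j Hj. apply in_seq in Hj.
  destruct (mk_excess_exists T v j) as [e [-> [E1 E2]]]; [lia|].
  rewrite lsum_cons, H, E2 by auto. cbn. ring.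
Qed.

Definition excess_level (T : rtree) (N : nat) : list (excess T) := flat_map (excess_at T) (level T N).

Lemma In_excess_level T (Hlf : locally_finite T) N e : In e (excess_level T N) <-> depth T (excess_vertex e) = N.
Proof.
  unfold excess_level. rewrite in_flat_map. split.
  - intros [v [Hv He]]. apply In_excess_at in He. apply In_level in Hv; auto. congruence.
  - intros H. exists (excess_vertex e). rewrite In_level, In_excess_at; auto.
Qed.

Lemma excess_level_NoDup T (Hlf : locally_finite T) N : NoDup (excess_level T N).
Proof.
  apply NoDup_flat_map_disjoint; [apply level_NoDup; auto|intros; apply excess_at_NoDup|].
  intros x y z _ _ Hx Hy. apply In_excess_at in Hx, Hy. congruence.
Qed.

(** * The shifted wandering basis *)

Definition windex (T : rtree) : Type := option (excess T).

Definition windex_depth {T} (i : windex T) : nat :=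
  match i with None => O | Some e => S (depth T (excess_vertex e)) end.

Definition basis_depth {T} (j : nat * windex T) : nat := (fst j + windex_depth (snd j))%nat.

(* [wandering T None] is the unit vector at the root and [wandering T (Some e)] is the
   Helmert vector number [excess_index e] placed on the children of [excess_vertex e];
   together they form an orthonormal basis of the wandering subspace [ker S*], and
   [basis] translates it by the powers of the shift. *)
Definition wandering (T : rtree) (i : windex T) (x : V T) : R :=
  match i with
  | None => if eq_dec_classic x (root T) then 1 else 0
  | Some e =>
      match par T x with
      | Some v => if eq_dec_classic v (excess_vertex e)
                  then helmert (excess_index e) (pos x (children T (excess_vertex e))) else 0
      | None => 0
      end
  end.

Definition basis (T : rtree) (j : nat * windex T) : V T -> R := Nat.iter (fst j) (rshift T) (wandering T (snd j)).

Definition coef (T : rtree) (f : V T -> R) (j : nat * windex T) : R :=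
  lsum (fun x => f x * basis T j x) (level T (basis_depth j)).

Definition child_values (T : rtree) (f : V T -> R) (v : V T) (p : nat) : R := f (nth p (children T v) (root T)).

Definition succ_index {T} (j : nat * windex T) : nat * windex T := (S (fst j), snd j).

Fixpoint basis_at (T : rtree) (N : nat) : list (nat * windex T) :=
  match N with
  | O => [(O, None)]
  | S N' => map succ_index (basis_at T N') ++ map (fun e => (O, Some e)) (excess_level T N')
  end.

Lemma basis_O T i : basis T (O, i) = wandering T i.
Proof. reflexivity. Qed.

Lemma basis_S T n i : basis T (S n, i) = rshift T (basis T (n, i)).
Proof. reflexivity. Qed.

Lemma wandering_child T e v u : par T u = Some v ->
  wandering T (Some e) u =
  if eq_dec_classic v (excess_vertex e) then helmert (excess_index e) (pos u (children T (excess_vertex e))) else 0.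
Proof. intros H. cbn. rewrite H. auto. Qed.

Lemma coef_root T f : coef T f (O, None) = f (root T).
Proof. unfold coef. cbn. destruct (eq_dec_classic (root T) (root T)); [ring|congruence]. Qed.

Lemma coef_linear T (a b : R) f g h j :
  coef T (fun x => a * f x + b * g x + h x) j = a * coef T f j + b * coef T g j + coef T h j.
Proof. unfold coef. rewrite <- !lsum_scal, <- !lsum_plus. apply lsum_ext. intros; ring. Qed.

Lemma basis_support T j x : depth T x <> basis_depth j -> basis T j x = 0.
Proof.
  destruct j as [n i]. unfold basis_depth; cbn [fst snd]. revert x. induction n; intros x Hx.
  - cbn. unfold wandering. destruct i as [e|]; cbn in Hx.
    + destruct (par T x) eqn:E; auto. destruct (eq_dec_classic v (excess_vertex e)); auto.
      subst. apply depth_child in E. lia.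
    + destruct (eq_dec_classic x (root T)); auto. subst. rewrite depth_root in Hx. lia.
  - rewrite basis_S. unfold rshift. destruct (par T x) eqn:E; auto.
    rewrite IHn; [lra|]. apply depth_child in E. lia.
Qed.

Section Basis.

Variables (T : rtree) (Hlf : locally_finite T).

Lemma lsum_children_pos v (phi : V T -> nat -> R) :
  lsum (fun u => phi u (pos u (children T v))) (children T v)
  = nsum (fun p => phi (nth p (children T v) (root T)) p) (card_Chi T v).
Proof. apply lsum_pos, children_NoDup; auto. Qed.

Lemma coef_S f n i : coef T f (S n, i) = coef T (radjoint T f) (n, i).
Proof. unfold coef, basis_depth. cbn [fst snd Nat.add]. rewrite basis_S. apply lsum_mul_rshift, Hlf. Qed.

Lemma coef_excess f e :
  coef T f (O, Some e) = helmert_coef (child_values T f (excess_vertex e)) (card_Chi T (excess_vertex e)) (excess_index e).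
Proof.
  unfold coef. change (basis_depth (O, Some e)) with (S (depth T (excess_vertex e))). rewrite lsum_level_S.
  rewrite (lsum_single _ _ (excess_vertex e)); [| apply level_NoDup; auto | apply In_level; auto |].
  - rewrite (lsum_ext _ (fun u => f u * helmert (excess_index e) (pos u (children T (excess_vertex e))))).
    + apply (lsum_children_pos (excess_vertex e) (fun u p => f u * helmert (excess_index e) p)).
    + intros u Hu. apply In_children in Hu; auto. rewrite basis_O, (wandering_child T e _ u Hu).
      destruct (eq_dec_classic _ _); [auto|congruence].
  - intros x Hx Hne. apply lsum_zero. intros u Hu. apply In_children in Hu; auto.
    rewrite basis_O, (wandering_child T e _ u Hu). destruct (eq_dec_classic x (excess_vertex e)); [congruence|ring].
Qed.

Lemma radjoint_wandering i v : radjoint T (wandering T i) v = 0.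
Proof.
  unfold radjoint. enough (lsum (wandering T i) (children T v) = 0) as -> by (unfold Rdiv; ring).
  destruct i as [e|].
  - destruct (eq_dec_classic v (excess_vertex e)) as [->|E].
    + rewrite (lsum_ext _ (fun u => helmert (excess_index e) (pos u (children T (excess_vertex e))))).
      * rewrite (lsum_children_pos (excess_vertex e) (fun u p => helmert (excess_index e) p)).
        apply nsum_helmert, excess_index_bound.
      * intros u Hu. apply In_children in Hu; auto. rewrite (wandering_child T e _ u Hu).
        destruct (eq_dec_classic _ _); congruence.
    + apply lsum_zero. intros u Hu. apply In_children in Hu; auto. rewrite (wandering_child T e _ u Hu).
      destruct (eq_dec_classic v (excess_vertex e)); congruence.
  - apply lsum_zero. intros u Hu. apply In_children in Hu; auto. cbn.
    destruct (eq_dec_classic u (root T)); auto. subst. rewrite par_root in Hu. discriminate.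
Qed.

Lemma lsum_wandering_mul_rshift i h n : lsum (fun x => wandering T i x * rshift T h x) (level T n) = 0.
Proof.
  destruct n as [|n].
  - cbn. unfold rshift. rewrite par_root. ring.
  - rewrite lsum_mul_rshift by auto. apply lsum_zero. intros v _. rewrite radjoint_wandering. ring.
Qed.

Lemma coef_rshift_O f i : coef T (rshift T f) (O, i) = 0.
Proof.
  unfold coef. rewrite (lsum_ext _ (fun x => wandering T i x * rshift T f x)) by (intros; rewrite basis_O; ring).
  apply lsum_wandering_mul_rshift.
Qed.

Lemma In_basis_at N j : In j (basis_at T N) <-> basis_depth j = N.
Proof.
  revert j; induction N; intros [n i]; unfold basis_depth; cbn [basis_at fst snd].
  - split; [intros [e|[]]; inversion e; auto|].
    intros H. left. destruct n; [|lia]. destruct i; cbn in H; [lia|auto].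
  - rewrite in_app_iff, !in_map_iff. split.
    + intros [[[n' i'] [e Ha]]|[e' [e He]]].
      * inversion e; subst. apply IHN in Ha. unfold basis_depth in Ha; cbn in Ha. lia.
      * inversion e; subst. cbn. apply In_excess_level in He; auto; lia.
    + intros H. destruct n as [|n].
      * right. destruct i as [e|]; cbn in H; [|lia]. exists e. split; auto. apply In_excess_level; auto; lia.
      * left. exists (n, i). split; auto. apply IHN. unfold basis_depth; cbn; lia.
Qed.

Lemma basis_at_NoDup N : NoDup (basis_at T N).
Proof.
  induction N; cbn [basis_at]; [repeat constructor; auto|].
  apply NoDup_app.
  - apply Injective_map_NoDup; auto. intros [a b] [c d] e. inversion e; auto.
  - apply Injective_map_NoDup; [intros a b e; inversion e; auto|apply excess_level_NoDup; auto].
  - intros x Hx Hy. rewrite in_map_iff in Hx, Hy. destruct Hx as [a [<- _]], Hy as [b [e _]]. discriminate.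
Qed.

Lemma wandering_excess_orthonormal e e' :
  lsum (fun x => wandering T (Some e) x * wandering T (Some e') x) (level T (S (depth T (excess_vertex e))))
  = delta (@pair nat (windex T) O (Some e)) (O, Some e').
Proof.
  rewrite lsum_level_S, (lsum_single _ _ (excess_vertex e)); [| apply level_NoDup; auto | apply In_level; auto |].
  - destruct (eq_dec_classic (excess_vertex e') (excess_vertex e)) as [E|E].
    + rewrite (lsum_ext _ (fun u => helmert (excess_index e) (pos u (children T (excess_vertex e)))
                                   * helmert (excess_index e') (pos u (children T (excess_vertex e))))).
      * rewrite (lsum_children_pos (excess_vertex e) (fun u p => helmert (excess_index e) p * helmert (excess_index e') p)).
        rewrite helmert_orthonormal; [| apply excess_index_bound | rewrite <- E; apply excess_index_bound].
        apply delta_iff. split; intros r.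
        -- f_equal. f_equal. apply excess_eq; auto.
        -- inversion r; auto.
      * intros u Hu. apply In_children in Hu; auto. rewrite !wandering_child with (v := excess_vertex e) by auto.
        destruct (eq_dec_classic _ (excess_vertex e)); [|congruence].
        destruct (eq_dec_classic _ (excess_vertex e')); [|congruence]. rewrite E. auto.
    + rewrite lsum_zero; [symmetry; apply delta_neq; intros r; inversion r; subst; auto|].
      intros u Hu. apply In_children in Hu; auto. rewrite (wandering_child T e') with (v := excess_vertex e) by auto.
      destruct (eq_dec_classic (excess_vertex e) (excess_vertex e')); [congruence|ring].
  - intros v Hv Hne. apply lsum_zero. intros u Hu. apply In_children in Hu; auto.
    rewrite (wandering_child T e) with (v := v) by auto. destruct (eq_dec_classic v (excess_vertex e)); [congruence|ring].
Qed.

Hypothesis Hll : leafless T.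

Lemma basis_orthonormal N j j' : In j (basis_at T N) -> In j' (basis_at T N) ->
  lsum (fun x => basis T j x * basis T j' x) (level T N) = delta j j'.
Proof.
  revert j j'; induction N; intros j j' Hj Hj'.
  - destruct Hj as [<-|[]], Hj' as [<-|[]]. rewrite delta_refl. cbn.
    destruct (eq_dec_classic (root T) (root T)); [ring|congruence].
  - cbn [basis_at] in Hj, Hj'. rewrite in_app_iff, !in_map_iff in Hj, Hj'.
    destruct Hj as [[[n i] [<- Ha]]|[e [<- He]]], Hj' as [[[n' i'] [<- Ha']]|[e' [<- He']]];
      unfold succ_index; cbn [fst snd].
    + rewrite !basis_S, lsum_rshift_mul_rshift, IHN by auto.
      apply delta_iff. split; intros E; inversion E; auto.
    + rewrite delta_neq by discriminate.
      rewrite (lsum_ext _ (fun x => wandering T (Some e') x * rshift T (basis T (n, i)) x)) by (intros; rewrite basis_O, basis_S; ring).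
      apply lsum_wandering_mul_rshift.
    + rewrite delta_neq by discriminate. apply lsum_wandering_mul_rshift.
    + apply In_excess_level in He, He'; auto. subst N. apply wandering_excess_orthonormal.
Qed.

Lemma lsum_children_eq_nsum f v : lsum f (children T v) = nsum (child_values T f v) (card_Chi T v).
Proof. exact (lsum_children_pos v (fun u _ => f u)). Qed.

Lemma children_parseval f v :
  lsum (fun u => f u * f u) (children T v) =
  radjoint T f v * radjoint T f v +
  nsum (fun j => helmert_coef (child_values T f v) (card_Chi T v) j * helmert_coef (child_values T f v) (card_Chi T v) j)
       (card_Chi T v - 1).
Proof.
  rewrite (lsum_children_pos v (fun u _ => f u * f u)). unfold radjoint. rewrite lsum_children_eq_nsum.
  destruct (sqrt_card_Chi T Hlf Hll v) as [Hs Hp]. pose proof (card_Chi_pos T Hlf Hll v).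
  destruct (card_Chi T v) as [|m]; [lia|]. replace (S m - 1)%nat with m by lia.
  transitivity (nsum (fun p => child_values T f v p * child_values T f v p) (S m)); [reflexivity|].
  rewrite helmert_parseval. f_equal. set (s := sqrt (INR (S m))) in *. rewrite <- Hs. field. lra.
Qed.

Lemma children_expansion f v u : In u (children T v) ->
  f u = radjoint T f v / sqrt (INR (card_Chi T v)) +
        nsum (fun j => helmert_coef (child_values T f v) (card_Chi T v) j * helmert j (pos u (children T v)))
             (card_Chi T v - 1).
Proof.
  intros Hu. unfold radjoint. rewrite lsum_children_eq_nsum.
  assert (Hpl : (pos u (children T v) < card_Chi T v)%nat) by (apply pos_lt_length; auto).
  assert (Fu : f u = child_values T f v (pos u (children T v))) by (unfold child_values; rewrite nth_pos; auto).
  destruct (sqrt_card_Chi T Hlf Hll v) as [Hs Hp]. pose proof (card_Chi_pos T Hlf Hll v).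
  destruct (card_Chi T v) as [|m]; [lia|]. replace (S m - 1)%nat with m by lia.
  rewrite Fu, (helmert_expansion _ m (pos u (children T v))) at 1 by auto.
  f_equal. set (s := sqrt (INR (S m))) in *. rewrite <- Hs. field. lra.
Qed.

Lemma level_parseval N f :
  lsum (fun x => f x * f x) (level T N) = lsum (fun j => coef T f j * coef T f j) (basis_at T N).
Proof.
  revert f; induction N; intros f.
  - cbn [level basis_at]. rewrite !lsum_cons, coef_root. cbn. ring.
  - rewrite lsum_level_S, (lsum_ext _ _ _ (fun v _ => children_parseval f v)), lsum_plus.
    cbn [basis_at]. rewrite lsum_app, !lsum_map, IHN. f_equal.
    + apply lsum_ext. intros [n i] _. unfold succ_index; cbn [fst snd]. rewrite coef_S. reflexivity.
    + unfold excess_level. rewrite lsum_flat_map. apply lsum_ext. intros v _.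
      symmetry. apply lsum_excess_at. intros e <-. rewrite coef_excess. reflexivity.
Qed.

Lemma level_expansion N f x : In x (level T N) ->
  f x = lsum (fun j => coef T f j * basis T j x) (basis_at T N).
Proof.
  revert f x; induction N; intros f x Hx.
  - destruct Hx as [<-|[]]. cbn [basis_at]. rewrite lsum_cons, coef_root, basis_O. cbn.
    destruct (eq_dec_classic (root T) (root T)); [ring|congruence].
  - cbn [level] in Hx. apply in_flat_map in Hx. destruct Hx as [v [Hv Hx]].
    pose proof Hx as Hp. apply In_children in Hp; auto.
    cbn [basis_at]. rewrite lsum_app, !lsum_map.
    rewrite (lsum_ext (fun a => coef T f (succ_index a) * basis T (succ_index a) x)
                      (fun a => coef T (radjoint T f) a * basis T a v * / sqrt (INR (card_Chi T v)))).
    2:{ intros [n i] _. unfold succ_index; cbn [fst snd]. rewrite coef_S, basis_S. unfold rshift. rewrite Hp.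
        unfold Rdiv. ring. }
    rewrite lsum_scalr, <- (IHN _ v Hv).
    unfold excess_level. rewrite lsum_flat_map, (lsum_single _ _ v); [| apply level_NoDup; auto | auto |].
    + rewrite (lsum_excess_at T v _ (fun j => helmert_coef (child_values T f v) (card_Chi T v) j * helmert j (pos x (children T v)))).
      * apply children_expansion; auto.
      * intros e <-. rewrite coef_excess, basis_O, (wandering_child T e _ x Hp).
        destruct (eq_dec_classic _ _); [auto|congruence].
    + intros v' Hv' Hne. apply lsum_zero. intros e He. apply In_excess_at in He.
      rewrite basis_O, (wandering_child T e v x Hp). destruct (eq_dec_classic v (excess_vertex e)); [congruence|ring].
Qed.

End Basis.

(** * Parseval's identity *)

Definition basis_upto (T : rtree) (N : nat) : list (nat * windex T) := flat_map (basis_at T) (seq 0 (S N)).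

Definition coef_norm2 (T : rtree) (f : V T -> C) (j : nat * windex T) : R :=
  coef T (re_part f) j * coef T (re_part f) j + coef T (im_part f) j * coef T (im_part f) j.

Lemma Cnorm2_nonneg (z : C) : 0 <= Cnorm2 z.
Proof. unfold Cnorm2. nra. Qed.

Lemma coef_norm2_nonneg T f j : 0 <= coef_norm2 T f j.
Proof. unfold coef_norm2. nra. Qed.

Lemma l2norm2_levels_upto T (Hlf : locally_finite T) (f : V T -> C) l :
  l2norm2 T f l <-> Un_cv (fun N => lsum (fun x => Cnorm2 (f x)) (levels_upto T N)) l.
Proof.
  apply (infinite_sum_exhaustion (enum T) (fun x => Cnorm2 (f x))); [exact (enum_inj T) | exact (enum_surj T) | |].
  - apply levels_upto_exhaustion; auto.
  - intros; apply Cnorm2_nonneg.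
Qed.

Section Parseval.

Variables (T : rtree) (Hlf : locally_finite T) (Hll : leafless T).

Lemma basis_upto_exhaustion : exhaustion (basis_upto T).
Proof.
  constructor.
  - intros N. apply NoDup_flat_map_disjoint; [apply seq_NoDup|intros; apply basis_at_NoDup; auto|].
    intros x y z _ _ Hx Hy. apply In_basis_at in Hx, Hy; auto. congruence.
  - intros N x. unfold basis_upto. rewrite !in_flat_map. intros [n [Hn Hx]]. exists n.
    rewrite in_seq in *. split; [lia|auto].
  - intros x. exists (basis_depth x). unfold basis_upto. rewrite in_flat_map. exists (basis_depth x).
    rewrite in_seq, In_basis_at by auto. split; [lia|auto].
Qed.

Lemma levels_upto_parseval (f : V T -> C) N :
  lsum (fun x => Cnorm2 (f x)) (levels_upto T N) = lsum (coef_norm2 T f) (basis_upto T N).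
Proof.
  unfold Cnorm2, coef_norm2, basis_upto. rewrite lsum_levels_upto, lsum_flat_map.
  apply lsum_ext. intros n _. rewrite !lsum_plus. f_equal; apply level_parseval; auto.
Qed.

Lemma l2norm2_coefs (f : V T -> C) l :
  l2norm2 T f l <-> Un_cv (fun N => lsum (coef_norm2 T f) (basis_upto T N)) l.
Proof.
  rewrite l2norm2_levels_upto by auto.
  split; intros H e He; destruct (H e He) as [M HM]; exists M; intros n Hn;
    [rewrite <- levels_upto_parseval | rewrite levels_upto_parseval]; auto.
Qed.

End Parseval.

(** * Sufficiency: transferring the basis *)

Definition reindex {T1 T2 : rtree} (rho : windex T2 -> windex T1) (j : nat * windex T2) : nat * windex T1 :=
  (fst j, rho (snd j)).

(* Sends [basis T1 (reindex rho j)] to [basis T2 j]; at a vertex [y] only the finitely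
   many basis vectors living on the level of [y] contribute. *)
Definition rtransfer (T1 T2 : rtree) (rho : windex T2 -> windex T1) (f : V T1 -> R) (y : V T2) : R :=
  lsum (fun j => coef T1 f (reindex rho j) * basis T2 j y) (basis_at T2 (depth T2 y)).

Definition transfer (T1 T2 : rtree) (rho : windex T2 -> windex T1) (f : V T1 -> C) (y : V T2) : C :=
  (rtransfer T1 T2 rho (re_part f) y, rtransfer T1 T2 rho (im_part f) y).

Lemma rtransfer_linear T1 T2 rho (a b : R) f g h y :
  rtransfer T1 T2 rho (fun x => a * f x + b * g x + h x) y
  = a * rtransfer T1 T2 rho f y + b * rtransfer T1 T2 rho g y + rtransfer T1 T2 rho h y.
Proof. unfold rtransfer. rewrite <- !lsum_scal, <- !lsum_plus. apply lsum_ext. intros j _. rewrite coef_linear. ring. Qed.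

Lemma transfer_linear T1 T2 rho (a : C) f g u :
  transfer T1 T2 rho (fun x => Cadd (Cmul a (f x)) (g x)) u = Cadd (Cmul a (transfer T1 T2 rho f u)) (transfer T1 T2 rho g u).
Proof.
  unfold transfer. rewrite re_part_comb, im_part_comb, !rtransfer_linear. unfold Cadd, Cmul. cbn. f_equal; ring.
Qed.

Section Transfer.

Variables (T1 T2 : rtree) (Hlf1 : locally_finite T1) (Hll1 : leafless T1)
  (Hlf2 : locally_finite T2) (Hll2 : leafless T2) (rho : windex T2 -> windex T1).

Lemma coef_rtransfer f j : coef T2 (rtransfer T1 T2 rho f) j = coef T1 f (reindex rho j).
Proof.
  unfold coef at 1.
  rewrite (lsum_ext _ (fun y => lsum (fun j' => coef T1 f (reindex rho j') * (basis T2 j' y * basis T2 j y))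
                                     (basis_at T2 (basis_depth j)))).
  2:{ intros y Hy. apply In_level in Hy; auto. unfold rtransfer. rewrite Hy, <- lsum_scalr.
      apply lsum_ext. intros; ring. }
  rewrite lsum_swap, (lsum_ext _ (fun j' => delta j j' * coef T1 f (reindex rho j'))).
  - apply (lsum_delta _ j (fun j' => coef T1 f (reindex rho j'))); [apply basis_at_NoDup; auto|apply In_basis_at; auto].
  - intros j' Hj'. rewrite lsum_scal, basis_orthonormal by (auto; apply In_basis_at; auto).
    rewrite (delta_iff j' j j j') by (split; auto). ring.
Qed.

Lemma coef_norm2_transfer f j : coef_norm2 T2 (transfer T1 T2 rho f) j = coef_norm2 T1 f (reindex rho j).
Proof. unfold coef_norm2. change (re_part (transfer T1 T2 rho f)) with (rtransfer T1 T2 rho (re_part f)).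
  change (im_part (transfer T1 T2 rho f)) with (rtransfer T1 T2 rho (im_part f)). rewrite !coef_rtransfer. reflexivity.
Qed.

Lemma l2norm2_transfer rho' (H1 : forall i, rho' (rho i) = i) (H2 : forall i, rho (rho' i) = i) f l :
  l2norm2 T1 f l -> l2norm2 T2 (transfer T1 T2 rho f) l.
Proof.
  intros Hf. apply l2norm2_coefs in Hf; auto. apply l2norm2_coefs; auto.
  assert (Hx : exhaustion (fun N => map (reindex rho) (basis_upto T2 N))).
  { apply (exhaustion_map _ _ (reindex rho')); [intros [n i]; unfold reindex; cbn; rewrite H1; auto| |].
    - intros [n i]; unfold reindex; cbn; rewrite H2; auto.
    - apply basis_upto_exhaustion; auto. }
  pose proof (Un_cv_exhaustion _ _ _ l (basis_upto_exhaustion T1 Hlf1) Hx (coef_norm2_nonneg T1 f) Hf) as Hc.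
  intros e He. destruct (Hc e He) as [M HM]. exists M. intros n Hn.
  rewrite (lsum_ext _ _ _ (fun j _ => coef_norm2_transfer f j)), <- lsum_map. apply HM; auto.
Qed.

Lemma rtransfer_rshift f y : rtransfer T1 T2 rho (rshift T1 f) y = rshift T2 (rtransfer T1 T2 rho f) y.
Proof.
  unfold rtransfer at 1. destruct (depth T2 y) as [|N] eqn:Ed.
  - cbn [basis_at lsum fold_right]. unfold reindex; cbn [fst snd]. rewrite coef_rshift_O by auto.
    unfold rshift. destruct (par T2 y) eqn:E; [|ring]. apply depth_child in E. lia.
  - destruct (par_of_depth_pos T2 y) as [v Hv]; [lia|]. pose proof Hv as Hd. apply depth_child in Hd.
    cbn [basis_at]. rewrite lsum_app, !lsum_map, (lsum_zero (fun e => _ * basis T2 (O, Some e) y)).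
    2:{ intros e _. unfold reindex; cbn [fst snd]. rewrite coef_rshift_O by auto. ring. }
    unfold rshift at 2. rewrite Hv. unfold rtransfer. replace (depth T2 v) with N by lia.
    rewrite Rplus_0_r. unfold Rdiv. rewrite <- lsum_scalr.
    apply lsum_ext. intros [n i] _. unfold reindex, succ_index; cbn [fst snd].
    rewrite coef_S, basis_S by auto. rewrite (functional_extensionality _ _ (radjoint_rshift T1 Hlf1 Hll1 f)).
    unfold rshift. rewrite Hv. unfold Rdiv. ring.
Qed.

End Transfer.

Lemma transfer_cancel T1 T2 (Hlf1 : locally_finite T1) (Hll1 : leafless T1)
  (Hlf2 : locally_finite T2) (Hll2 : leafless T2)
  rho rho' (H : forall i, rho' (rho i) = i) g y :
  transfer T1 T2 rho (transfer T2 T1 rho' g) y = g y.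
Proof.
  assert (K : forall h : V T2 -> R, rtransfer T1 T2 rho (rtransfer T2 T1 rho' h) y = h y).
  { intros h. unfold rtransfer at 1.
    rewrite (lsum_ext _ (fun j => coef T2 h j * basis T2 j y)).
    - symmetry. apply level_expansion, In_level; auto.
    - intros [n i] _. rewrite coef_rtransfer by auto. unfold reindex; cbn. rewrite H. auto. }
  unfold transfer at 1. change (re_part (transfer T2 T1 rho' g)) with (rtransfer T2 T1 rho' (re_part g)).
  change (im_part (transfer T2 T1 rho' g)) with (rtransfer T2 T1 rho' (im_part g)).
  rewrite !K. unfold re_part, im_part. destruct (g y); auto.
Qed.

Theorem unitarily_equivalent_of_same_card T1 T2 :
  locally_finite T1 -> leafless T1 -> locally_finite T2 -> leafless T2 ->
  same_card (excess T1) (excess T2) ->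
  unitarily_equivalent T1 T2 (dirichlet_shift T1 1) (dirichlet_shift T2 1).
Proof.
  intros Hlf1 Hll1 Hlf2 Hll2 [p [q [Hqp Hpq]]].
  set (rho := fun i : windex T2 => option_map q i). set (rho' := fun i : windex T1 => option_map p i).
  assert (R1 : forall i, rho' (rho i) = i) by (intros [e|]; cbn; try rewrite Hpq; auto).
  assert (R2 : forall i, rho (rho' i) = i) by (intros [e|]; cbn; try rewrite Hqp; auto).
  exists (transfer T1 T2 rho). split; [|split; [|split; [|split]]].
  - intros f [l Hl]. exists l. apply (l2norm2_transfer T1 T2 Hlf1 Hll1 Hlf2 Hll2 rho rho'); auto.
  - intros a f g _ _ u. apply transfer_linear.
  - intros f l _ Hl. apply (l2norm2_transfer T1 T2 Hlf1 Hll1 Hlf2 Hll2 rho rho'); auto.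
  - intros g [l Hl]. exists (transfer T2 T1 rho' g). split.
    + exists l. apply (l2norm2_transfer T2 T1 Hlf2 Hll2 Hlf1 Hll1 rho' rho); auto.
    + intros u. apply transfer_cancel; auto.
  - intros f _ u. unfold transfer. rewrite re_part_dirichlet_shift, im_part_dirichlet_shift, !rtransfer_rshift by auto.
    unfold dirichlet_shift, rshift. destruct (par T2 u); auto.
    rewrite dweight_1. unfold Cmul, RtoC. cbn. f_equal; unfold re_part, im_part; cbn; unfold Rdiv; ring.
Qed.

(** * Orthogonality and wandering vectors *)

(* Only norms are available on [l2], so orthogonality is expressed by Pythagoras'
   identity for all complex multiples. *)
Definition orthogonal (T : rtree) (f h : V T -> C) : Prop :=
  forall a l1 l2 l3, l2norm2 T f l1 -> l2norm2 T h l2 ->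
    l2norm2 T (fun x => Cadd (Cmul a (h x)) (f x)) l3 -> l3 = l1 + Cnorm2 a * l2.

Definition cross_re {T} (f h : V T -> C) (x : V T) : R := fst (f x) * fst (h x) + snd (f x) * snd (h x).
Definition cross_im {T} (f h : V T -> C) (x : V T) : R := snd (f x) * fst (h x) - fst (f x) * snd (h x).

Lemma Cnorm2_comb (a h f : C) : Cnorm2 (Cadd (Cmul a h) f) =
  Cnorm2 f + Cnorm2 a * Cnorm2 h + 2 * fst a * (fst f * fst h + snd f * snd h) + 2 * snd a * (snd f * fst h - fst f * snd h).
Proof. destruct a, h, f. unfold Cnorm2, Cadd, Cmul. cbn. ring. Qed.

Lemma l2norm2_unique T f l l' : l2norm2 T f l -> l2norm2 T f l' -> l = l'.
Proof. apply uniqueness_sum. Qed.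

Section Orthogonality.

Variables (T : rtree) (Hlf : locally_finite T).

Lemma l2norm2_comb f h a l1 l2 c1 c2 : l2norm2 T f l1 -> l2norm2 T h l2 ->
  (exists N0, forall N, (N >= N0)%nat ->
     lsum (cross_re f h) (levels_upto T N) = c1 /\ lsum (cross_im f h) (levels_upto T N) = c2) ->
  l2norm2 T (fun x => Cadd (Cmul a (h x)) (f x)) (l1 + Cnorm2 a * l2 + 2 * fst a * c1 + 2 * snd a * c2).
Proof.
  intros Hf Hh [N0 HN]. apply l2norm2_levels_upto in Hf, Hh; auto. apply l2norm2_levels_upto; auto.
  apply (Un_cv_ext_eventually (fun N => lsum (fun x => Cnorm2 (f x)) (levels_upto T N)
     + Cnorm2 a * lsum (fun x => Cnorm2 (h x)) (levels_upto T N) + 2 * fst a * c1 + 2 * snd a * c2)).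
  - repeat apply CV_plus; auto using Un_cv_const. apply CV_mult; auto using Un_cv_const.
  - exists N0. intros N HN0. destruct (HN N HN0) as [<- <-].
    rewrite (lsum_ext _ (fun x => Cnorm2 (f x) + Cnorm2 a * Cnorm2 (h x) + 2 * fst a * cross_re f h x
                                  + 2 * snd a * cross_im f h x)).
    + rewrite !lsum_plus, !lsum_scal. ring.
    + intros x _. rewrite Cnorm2_comb. reflexivity.
Qed.

Lemma in_l2_comb f h : in_l2 T f -> in_l2 T h ->
  (forall N, lsum (cross_re f h) (levels_upto T N) = 0 /\ lsum (cross_im f h) (levels_upto T N) = 0) ->
  forall a, in_l2 T (fun x => Cadd (Cmul a (h x)) (f x)).
Proof.
  intros [l1 H1] [l2 H2] Hc a. eexists. apply (l2norm2_comb f h a l1 l2 0 0); auto. exists O; intros; apply Hc.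
Qed.

Lemma orthogonal_of_cross f h :
  (forall N, lsum (cross_re f h) (levels_upto T N) = 0 /\ lsum (cross_im f h) (levels_upto T N) = 0) -> orthogonal T f h.
Proof.
  intros H a l1 l2 l3 H1 H2 H3.
  assert (K : l2norm2 T (fun x => Cadd (Cmul a (h x)) (f x)) (l1 + Cnorm2 a * l2 + 2 * fst a * 0 + 2 * snd a * 0))
    by (apply l2norm2_comb; auto; exists O; intros; apply H).
  rewrite (l2norm2_unique _ _ _ _ H3 K). ring.
Qed.

Lemma l2norm2_of_level_support (h : V T -> R) L : (forall x, depth T x <> L -> h x = 0) ->
  l2norm2 T (of_real h) (lsum (fun x => h x * h x) (level T L)).
Proof.
  intros Hh. apply l2norm2_levels_upto; auto. apply (Un_cv_ext_eventually (fun _ => lsum (fun x => h x * h x) (level T L))).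
  - apply Un_cv_const.
  - exists L. intros N HN. rewrite (lsum_ext (fun x => Cnorm2 (of_real h x)) (fun x => h x * h x)).
    + apply lsum_levels_upto_level; auto. intros x Hx. rewrite Hh; auto; ring.
    + intros x _. unfold Cnorm2, of_real. cbn. ring.
Qed.

Hypothesis Hll : leafless T.

Lemma l2norm2_basis j : l2norm2 T (of_real (basis T j)) 1.
Proof.
  replace 1 with (lsum (fun x => basis T j x * basis T j x) (level T (basis_depth j))).
  - apply l2norm2_of_level_support. intros; apply basis_support; auto.
  - rewrite basis_orthonormal, delta_refl by (auto; apply In_basis_at; auto). reflexivity.
Qed.

Lemma coef_S_orthogonal f n i : in_l2 T f -> orthogonal T f (of_real (basis T (S n, i))) ->
  coef T (re_part f) (S n, i) = 0 /\ coef T (im_part f) (S n, i) = 0.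
Proof.
  intros [l1 Hf] Ho. set (j := (S n, i)).
  assert (Hc : exists N0, forall N, (N >= N0)%nat ->
      lsum (cross_re f (of_real (basis T j))) (levels_upto T N) = coef T (re_part f) j /\
      lsum (cross_im f (of_real (basis T j))) (levels_upto T N) = coef T (im_part f) j).
  { exists (basis_depth j). intros N HN. unfold cross_re, cross_im, of_real, coef, re_part, im_part; cbn [fst snd].
    split; rewrite (lsum_levels_upto_level T Hlf _ (basis_depth j)); auto;
      try (intros x Hx; rewrite basis_support; auto; ring); apply lsum_ext; intros; ring. }
  pose proof (l2norm2_basis j) as Hb. split.
  - pose proof (Ho (1, 0) _ _ _ Hf Hb (l2norm2_comb _ _ (1, 0) l1 1 _ _ Hf Hb Hc)) as E. unfold Cnorm2 in E. cbn [fst snd] in E. lra.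
  - pose proof (Ho (0, 1) _ _ _ Hf Hb (l2norm2_comb _ _ (0, 1) l1 1 _ _ Hf Hb Hc)) as E. unfold Cnorm2 in E. cbn [fst snd] in E. lra.
Qed.

Lemma wandering_cross i i' : i <> i' -> forall N,
  lsum (cross_re (of_real (wandering T i)) (of_real (wandering T i'))) (levels_upto T N) = 0 /\
  lsum (cross_im (of_real (wandering T i)) (of_real (wandering T i'))) (levels_upto T N) = 0.
Proof.
  intros Hne N. split; [|apply lsum_zero; intros x _; unfold cross_im, of_real; cbn; ring].
  rewrite lsum_levels_upto. apply lsum_zero. intros n _.
  unfold cross_re, of_real; cbn [fst snd]. rewrite <- !basis_O.
  destruct (Nat.eq_dec n (windex_depth i)) as [->|e1]; [destruct (Nat.eq_dec (windex_depth i) (windex_depth i')) as [e2|e2]|].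
  - rewrite (lsum_ext _ (fun x => basis T (O, i) x * basis T (O, i') x)) by (intros; ring).
    change (windex_depth i) with (basis_depth (O, i)).
    rewrite basis_orthonormal by (auto; apply In_basis_at; auto). apply delta_neq. intros E; inversion E; auto.
  - apply lsum_zero. intros x Hx. apply In_level in Hx; auto.
    rewrite (basis_support T (O, i')) by (auto; unfold basis_depth; cbn; lia). ring.
  - apply lsum_zero. intros x Hx. apply In_level in Hx; auto.
    rewrite (basis_support T (O, i)) by (auto; unfold basis_depth; cbn; lia). ring.
Qed.

Lemma wandering_shift_cross i G : forall N,
  lsum (cross_re (of_real (wandering T i)) (dirichlet_shift T 1 G)) (levels_upto T N) = 0 /\
  lsum (cross_im (of_real (wandering T i)) (dirichlet_shift T 1 G)) (levels_upto T N) = 0.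
Proof.
  intros N. split; rewrite lsum_levels_upto; apply lsum_zero; intros n _.
  - rewrite <- (lsum_wandering_mul_rshift T Hlf i (re_part G) n). apply lsum_ext. intros x _.
    unfold cross_re, of_real; cbn [fst snd]. rewrite <- re_part_dirichlet_shift. unfold re_part. ring.
  - transitivity (-1 * lsum (fun x => wandering T i x * rshift T (im_part G) x) (level T n)).
    + rewrite <- lsum_scal. apply lsum_ext. intros x _. unfold cross_im, of_real; cbn [fst snd].
      rewrite <- im_part_dirichlet_shift. unfold im_part. ring.
    + rewrite lsum_wandering_mul_rshift by auto. ring.
Qed.

End Orthogonality.

Section Bessel.

Variables (D K : Type) (dl : list D) (kl : list K) (v : K -> D -> R).
Hypotheses (Hd : NoDup dl) (Hk : NoDup kl)
  (Horth : forall k k', In k kl -> In k' kl -> lsum (fun d => v k d * v k' d) dl = delta k k').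

(* Bessel's inequality for the unit vector at [d]. *)
Lemma bessel_coordinate d : In d dl -> lsum (fun k => v k d * v k d) kl <= 1.
Proof.
  intros Hdd. set (P := fun d' => lsum (fun k => v k d * v k d') kl).
  assert (E0 : 0 <= lsum (fun d' => (delta d d' - P d') * (delta d d' - P d')) dl)
    by (apply lsum_nonneg; intros x _; apply Rle_0_sqr).
  enough (lsum (fun d' => (delta d d' - P d') * (delta d d' - P d')) dl = 1 - P d) by (unfold P in *; lra).
  rewrite (lsum_ext _ (fun d' => delta d d' * delta d d' - 2 * (delta d d' * P d') + P d' * P d')) by (intros; ring).
  rewrite !lsum_plus, lsum_minus, lsum_scal, (lsum_delta dl d (fun d' => delta d d')), delta_refl,
    (lsum_delta dl d P) by auto.
  rewrite (lsum_ext (fun d' => P d' * P d') (fun d' => lsum (fun k => lsum (fun k' => v k d * v k' d * (v k d' * v k' d')) kl) kl)).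
  2:{ intros d' _. unfold P. rewrite lsum_sq. apply lsum_ext. intros. apply lsum_ext. intros. ring. }
  rewrite lsum_swap, (lsum_ext _ (fun k => v k d * v k d)); [unfold P; ring|].
  intros k Hk1. rewrite lsum_swap, (lsum_ext _ (fun k' => delta k k' * (v k d * v k' d))).
  - apply (lsum_delta kl k (fun k' => v k d * v k' d)); auto.
  - intros k' Hk'. rewrite lsum_scal, Horth by auto. ring.
Qed.

Lemma orthonormal_length_le : (length kl <= length dl)%nat.
Proof.
  apply INR_le. rewrite <- (Rmult_1_r (INR (length kl))), <- (Rmult_1_r (INR (length dl))), <- !lsum_const.
  rewrite (lsum_ext _ (fun k => lsum (fun d => v k d * v k d) dl)) by (intros; rewrite Horth, delta_refl; auto).
  rewrite lsum_swap. apply lsum_le. intros; apply bessel_coordinate; auto.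
Qed.

End Bessel.

Definition with_bool {A} (l : list A) : list (A * bool) := flat_map (fun x => [(x, false); (x, true)]) l.

Lemma with_bool_NoDup {A} (l : list A) : NoDup l -> NoDup (with_bool l).
Proof.
  intros H. apply NoDup_flat_map_disjoint; auto.
  - intros x _. repeat constructor; cbn; [intros [e|[]]; discriminate|tauto].
  - intros x y z _ _ [<-|[<-|[]]] [e|[e|[]]]; inversion e; auto.
Qed.

Lemma length_with_bool {A} (l : list A) : length (with_bool l) = (2 * length l)%nat.
Proof. induction l as [|a l IH]; cbn; auto. unfold with_bool in *. rewrite IH. lia. Qed.

Lemma In_with_bool {A} (l : list A) x b : In (x, b) (with_bool l) <-> In x l.
Proof.
  unfold with_bool. rewrite in_flat_map. split.
  - intros [y [Hy [e|[e|[]]]]]; inversion e; subst; auto.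
  - intros H. exists x. split; auto. destruct b; cbn; auto.
Qed.

Lemma lsum_with_bool {A} (g : A * bool -> R) l : lsum g (with_bool l) = lsum (fun x => g (x, false) + g (x, true)) l.
Proof. unfold with_bool. rewrite lsum_flat_map. apply lsum_ext. intros. rewrite !lsum_cons. cbn. ring. Qed.

Definition windex_list {T} (ls : list (excess T)) : list (windex T) := None :: map Some ls.

Lemma windex_list_NoDup {T} (ls : list (excess T)) : NoDup ls -> NoDup (windex_list ls).
Proof.
  intros H. constructor; [rewrite in_map_iff; intros [x [e _]]; discriminate|].
  apply Injective_map_NoDup; auto. intros x y e; inversion e; auto.
Qed.

Lemma windex_list_Full {T} (ls : list (excess T)) : Full ls -> Full (windex_list ls).
Proof. intros H [e|]; [right; apply in_map; auto|left; auto]. Qed.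

Lemma length_windex_list {T} (ls : list (excess T)) : length (windex_list ls) = S (length ls).
Proof. cbn. rewrite length_map. auto. Qed.

Definition is_wandering (T : rtree) (f : V T -> C) : Prop :=
  forall n i, coef T (re_part f) (S n, i) = 0 /\ coef T (im_part f) (S n, i) = 0.

(* Real coordinates of a wandering vector [f], and of [i f], on the basis [wandering T]. *)
Definition wcoord {T} (f : V T -> C) (d : windex T * bool) : R :=
  if snd d then coef T (im_part f) (O, fst d) else coef T (re_part f) (O, fst d).
Definition wcoord_i {T} (f : V T -> C) (d : windex T * bool) : R :=
  if snd d then coef T (re_part f) (O, fst d) else - coef T (im_part f) (O, fst d).

Definition wdot {T} (ls : list (excess T)) (X Z : windex T * bool -> R) : R :=
  lsum (fun d => X d * Z d) (with_bool (windex_list ls)).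

Lemma wcoord_comb T (a : C) (h f : V T -> C) d :
  wcoord (fun x => Cadd (Cmul a (h x)) (f x)) d = fst a * wcoord h d + snd a * wcoord_i h d + wcoord f d.
Proof.
  unfold wcoord, wcoord_i. destruct d as [i []]; cbn [fst snd]; [rewrite im_part_comb | rewrite re_part_comb];
    rewrite coef_linear; ring.
Qed.

Lemma is_wandering_comb T (a : C) (h f : V T -> C) :
  is_wandering T h -> is_wandering T f -> is_wandering T (fun x => Cadd (Cmul a (h x)) (f x)).
Proof.
  intros H1 H2 n i. rewrite re_part_comb, im_part_comb, !coef_linear.
  destruct (H1 n i) as [-> ->], (H2 n i) as [-> ->]. split; ring.
Qed.

Lemma wdot_comm {T} ls (X Z : windex T * bool -> R) : wdot ls X Z = wdot ls Z X.
Proof. apply lsum_ext. intros; ring. Qed.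

Lemma wdot_i_i {T} ls (h f : V T -> C) : wdot ls (wcoord_i h) (wcoord_i f) = wdot ls (wcoord h) (wcoord f).
Proof. unfold wdot. rewrite !lsum_with_bool. apply lsum_ext. intros. unfold wcoord, wcoord_i; cbn. ring. Qed.

Lemma wdot_self_i {T} ls (h : V T -> C) : wdot ls (wcoord h) (wcoord_i h) = 0.
Proof. unfold wdot. rewrite !lsum_with_bool. apply lsum_zero. intros. unfold wcoord, wcoord_i; cbn. ring. Qed.

Lemma wdot_expand {T} ls (X Y Z : windex T * bool -> R) (a1 a2 : R) :
  wdot ls (fun d => a1 * X d + a2 * Y d + Z d) (fun d => a1 * X d + a2 * Y d + Z d) =
  a1 * a1 * wdot ls X X + a2 * a2 * wdot ls Y Y + wdot ls Z Z
  + 2 * a1 * a2 * wdot ls X Y + 2 * a1 * wdot ls X Z + 2 * a2 * wdot ls Y Z.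
Proof. unfold wdot. rewrite <- !lsum_scal, <- !lsum_plus. apply lsum_ext. intros; ring. Qed.

Section WanderingFamily.

Variables (T : rtree) (Hlf : locally_finite T) (Hll : leafless T) (ls : list (excess T)).
Hypothesis (Hls : Listing ls).

Lemma l2norm2_wandering f : is_wandering T f -> l2norm2 T f (wdot ls (wcoord f) (wcoord f)).
Proof.
  intros Hw. apply l2norm2_coefs; auto. destruct Hls as [Hnd Hcov].
  set (KK := map (fun i => (O, i)) (windex_list ls)).
  assert (HKK : NoDup KK)
    by (apply Injective_map_NoDup; [intros x y e; inversion e; auto|apply windex_list_NoDup; auto]).
  assert (Hs : lsum (coef_norm2 T f) KK = wdot ls (wcoord f) (wcoord f)).
  { unfold KK, wdot. rewrite lsum_map, lsum_with_bool. apply lsum_ext. intros i _. unfold coef_norm2, wcoord. cbn. ring. }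
  destruct (exhaustion_absorbs _ (basis_upto_exhaustion T Hlf) KK) as [N0 HN0].
  apply (Un_cv_ext_eventually (fun _ => wdot ls (wcoord f) (wcoord f))); [apply Un_cv_const|].
  exists N0. intros N HN. rewrite <- Hs. apply lsum_support; auto.
  - apply exhaustion_NoDup, basis_upto_exhaustion; auto.
  - eapply incl_tran; eauto. apply exhaustion_le; auto. apply basis_upto_exhaustion; auto.
  - intros [n i] _ Hn. destruct n.
    + exfalso. apply Hn. apply in_map, windex_list_Full; auto.
    + unfold coef_norm2. destruct (Hw n i) as [-> ->]. ring.
Qed.

Lemma wdot_orthogonal f h : is_wandering T f -> is_wandering T h -> orthogonal T f h ->
  wdot ls (wcoord h) (wcoord h) = 1 ->
  wdot ls (wcoord h) (wcoord f) = 0 /\ wdot ls (wcoord_i h) (wcoord f) = 0.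
Proof.
  intros Hf Hh Ho Hn.
  assert (K : forall a : C,
    wdot ls (fun d => fst a * wcoord h d + snd a * wcoord_i h d + wcoord f d)
            (fun d => fst a * wcoord h d + snd a * wcoord_i h d + wcoord f d)
    = wdot ls (wcoord f) (wcoord f) + Cnorm2 a * wdot ls (wcoord h) (wcoord h)).
  { intros a. set (g := fun x => Cadd (Cmul a (h x)) (f x)).
    transitivity (wdot ls (wcoord g) (wcoord g)); [apply lsum_ext; intros; unfold g; rewrite !wcoord_comb; reflexivity|].
    apply (Ho a); apply l2norm2_wandering; auto. apply is_wandering_comb; auto. }
  pose proof (K (1, 0)) as A1. pose proof (K (0, 1)) as A2. rewrite wdot_expand in A1, A2.
  rewrite wdot_i_i, wdot_self_i, Hn in A1, A2. unfold Cnorm2 in A1, A2. cbn [fst snd] in A1, A2. split; lra.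
Qed.

(* The real vectors [wcoord f] and [wcoord_i f] of an orthonormal family of wandering
   vectors form a real orthonormal family twice as long, in a space of dimension
   [2 (1 + length ls)]. *)
Lemma wandering_family_length_le {Kt} (kl : list Kt) (F : Kt -> V T -> C) : NoDup kl ->
  (forall k, In k kl -> l2norm2 T (F k) 1) ->
  (forall k k', In k kl -> In k' kl -> k <> k' -> orthogonal T (F k) (F k')) ->
  (forall k, In k kl -> is_wandering T (F k)) -> (length kl <= S (length ls))%nat.
Proof.
  intros Hkl Hn Ho Hw. destruct Hls as [Hnd Hcov].
  assert (N1 : forall k, In k kl -> wdot ls (wcoord (F k)) (wcoord (F k)) = 1)
    by (intros k Hk; apply (l2norm2_unique T (F k)); auto; apply l2norm2_wandering; auto).
  set (v := fun (kb : Kt * bool) => if snd kb then wcoord_i (F (fst kb)) else wcoord (F (fst kb))).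
  enough (length (with_bool kl) <= length (with_bool (windex_list ls)))%nat
    by (rewrite !length_with_bool, length_windex_list in H; lia).
  apply (orthonormal_length_le _ _ _ _ v); [apply with_bool_NoDup, windex_list_NoDup; auto|apply with_bool_NoDup; auto|].
  intros [k b] [k' b'] Hk Hk'. apply In_with_bool in Hk, Hk'.
  change (wdot ls (v (k, b)) (v (k', b')) = delta (k, b) (k', b')). unfold v; cbn [fst snd].
  destruct (eq_dec_classic k k') as [<-|ne].
  - destruct b, b'.
    + rewrite wdot_i_i, N1, delta_refl; auto.
    + rewrite wdot_comm, wdot_self_i, delta_neq; auto. intro E; inversion E.
    + rewrite wdot_self_i, delta_neq; auto. intro E; inversion E.
    + rewrite N1, delta_refl; auto.
  - rewrite delta_neq by (intro E; inversion E; auto).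
    destruct (wdot_orthogonal (F k) (F k')) as [P1 P2]; auto.
    destruct (wdot_orthogonal (F k') (F k)) as [P3 P4]; auto.
    destruct b, b'; [rewrite wdot_i_i| |rewrite wdot_comm|]; auto.
Qed.

End WanderingFamily.

(** * Necessity: unitary intertwiners *)

Lemma l2norm2_dirichlet_shift T (Hlf : locally_finite T) (Hll : leafless T) G l :
  l2norm2 T G l -> l2norm2 T (dirichlet_shift T 1 G) l.
Proof.
  assert (Hlev : forall N, lsum (fun x => Cnorm2 (dirichlet_shift T 1 G x)) (levels_upto T (S N))
                           = lsum (fun x => Cnorm2 (G x)) (levels_upto T N)).
  { intros N. rewrite !lsum_levels_upto. change (seq 0 (S (S N))) with (0%nat :: seq 1 (S N)).
    rewrite lsum_cons, <- seq_shift, lsum_map.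
    replace (lsum (fun x => Cnorm2 (dirichlet_shift T 1 G x)) (level T 0)) with 0
      by (cbn; unfold dirichlet_shift; rewrite par_root; unfold Cnorm2, C0; cbn; ring).
    rewrite Rplus_0_l. apply lsum_ext. intros n _.
    rewrite (lsum_ext _ (fun x => rshift T (re_part G) x * rshift T (re_part G) x
                                 + rshift T (im_part G) x * rshift T (im_part G) x)).
    - rewrite lsum_plus, !lsum_rshift_mul_rshift, <- lsum_plus by auto. reflexivity.
    - intros x _. rewrite <- re_part_dirichlet_shift, <- im_part_dirichlet_shift. reflexivity. }
  intros H. apply l2norm2_levels_upto in H; auto. apply l2norm2_levels_upto; auto.
  intros e He. destruct (H e He) as [M HM]. exists (S M). intros n Hn. destruct n; [lia|].
  rewrite Hlev. apply HM. lia.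
Qed.

Lemma in_l2_wandering T (Hlf : locally_finite T) (Hll : leafless T) i : in_l2 T (of_real (wandering T i)).
Proof. exists 1. apply (l2norm2_basis T Hlf Hll (O, i)). Qed.

Section Intertwiner.

Variables (T1 T2 : rtree) (Hlf1 : locally_finite T1) (Hll1 : leafless T1)
  (Hlf2 : locally_finite T2) (Hll2 : leafless T2) (U : (V T1 -> C) -> (V T2 -> C)).
Hypotheses
  (HU_l2 : forall f, in_l2 T1 f -> in_l2 T2 (U f))
  (HU_lin : forall (a : C) f g, in_l2 T1 f -> in_l2 T1 g ->
     forall u, U (fun x => Cadd (Cmul a (f x)) (g x)) u = Cadd (Cmul a (U f u)) (U g u))
  (HU_iso : forall f l, in_l2 T1 f -> l2norm2 T1 f l -> l2norm2 T2 (U f) l)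
  (HU_onto : forall g, in_l2 T2 g -> exists f, in_l2 T1 f /\ forall u, U f u = g u)
  (HU_shift : forall f, in_l2 T1 f -> forall u, U (dirichlet_shift T1 1 f) u = dirichlet_shift T2 1 (U f) u).

Lemma U_comb a f h : in_l2 T1 f -> in_l2 T1 h ->
  U (fun x => Cadd (Cmul a (h x)) (f x)) = (fun x => Cadd (Cmul a (U h x)) (U f x)).
Proof. intros Hf Hh. extensionality u. apply HU_lin; auto. Qed.

Lemma orthogonal_of_image f h : in_l2 T1 f -> in_l2 T1 h -> orthogonal T2 (U f) (U h) -> orthogonal T1 f h.
Proof.
  intros Hf Hh Ho a l1 l2 l3 H1 H2 H3. apply (Ho a); try (apply HU_iso; auto).
  rewrite <- U_comb by auto. apply HU_iso; auto. exists l3; auto.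
Qed.

Lemma orthogonal_image f h : in_l2 T1 f -> in_l2 T1 h -> (forall a, in_l2 T1 (fun x => Cadd (Cmul a (h x)) (f x))) ->
  orthogonal T1 f h -> orthogonal T2 (U f) (U h).
Proof.
  intros Hf Hh Hc Ho a l1 l2 l3 H1 H2 H3.
  pose proof Hf as [l1' Hf']. pose proof Hh as [l2' Hh']. destruct (Hc a) as [l3' H3'].
  assert (E3 : l2norm2 T2 (fun x => Cadd (Cmul a (U h x)) (U f x)) l3')
    by (rewrite <- U_comb by auto; apply HU_iso; auto; eexists; eauto).
  rewrite (l2norm2_unique _ _ _ _ H1 (HU_iso _ _ Hf Hf')), (l2norm2_unique _ _ _ _ H2 (HU_iso _ _ Hh Hh')),
    (l2norm2_unique _ _ _ _ H3 E3).
  apply (Ho a); auto.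
Qed.

(* Preimages of an orthonormal family of wandering vectors of [T2] are orthonormal and wandering in [T1]. *)
Lemma excess_target_length_le (ls1 : list (excess T1)) (Hls1 : Listing ls1) (l2 : list (excess T2)) :
  NoDup l2 -> (length l2 <= length ls1)%nat.
Proof.
  intros Hn2.
  set (F := fun k : windex T2 => epsilon (inhabits (fun _ : V T1 => C0))
                                          (fun f => in_l2 T1 f /\ forall u, U f u = of_real (wandering T2 k) u)).
  assert (FS : forall k, in_l2 T1 (F k) /\ forall u, U (F k) u = of_real (wandering T2 k) u)
    by (intros k; apply epsilon_spec, HU_onto, in_l2_wandering; auto).
  assert (FU : forall k, U (F k) = of_real (wandering T2 k)) by (intros k; extensionality u; apply FS).
  enough (length (windex_list l2) <= S (length ls1))%nat by (rewrite length_windex_list in H; lia).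
  apply (wandering_family_length_le T1 Hlf1 Hll1 ls1 Hls1 (windex_list l2) F); [apply windex_list_NoDup; auto| | |].
  - intros k _. destruct (proj1 (FS k)) as [l Hl]. pose proof (HU_iso _ _ (proj1 (FS k)) Hl) as HU.
    rewrite FU in HU. rewrite (l2norm2_unique _ _ _ _ HU (l2norm2_basis T2 Hlf2 Hll2 (O, k))) in Hl. exact Hl.
  - intros k k' _ _ Hne. apply orthogonal_of_image; try apply FS. rewrite !FU.
    apply orthogonal_of_cross, wandering_cross; auto.
  - intros k _ n i. apply coef_S_orthogonal; auto; [apply FS|].
    apply orthogonal_of_image; [apply FS|exists 1; apply l2norm2_basis; auto|].
    rewrite FU, basis_S, <- dirichlet_shift_of_real.
    replace (U (dirichlet_shift T1 1 (of_real (basis T1 (n, i)))))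
      with (dirichlet_shift T2 1 (U (of_real (basis T1 (n, i)))))
      by (extensionality u; symmetry; apply HU_shift; exists 1; apply l2norm2_basis; auto).
    apply orthogonal_of_cross, wandering_shift_cross; auto.
Qed.

(* Images of the orthonormal wandering vectors of [T1] are orthonormal and wandering in [T2]. *)
Lemma excess_source_length_le (ls2 : list (excess T2)) (Hls2 : Listing ls2) (l1 : list (excess T1)) :
  NoDup l1 -> (length l1 <= length ls2)%nat.
Proof.
  intros Hn1. set (F := fun k : windex T1 => U (of_real (wandering T1 k))).
  assert (Wl : forall k, in_l2 T1 (of_real (wandering T1 k))) by (intros; apply in_l2_wandering; auto).
  enough (length (windex_list l1) <= S (length ls2))%nat by (rewrite length_windex_list in H; lia).
  apply (wandering_family_length_le T2 Hlf2 Hll2 ls2 Hls2 (windex_list l1) F); [apply windex_list_NoDup; auto| | |].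
  - intros k _. apply HU_iso; auto. apply (l2norm2_basis T1 Hlf1 Hll1 (O, k)).
  - intros k k' _ _ Hne. apply orthogonal_image; auto.
    + apply in_l2_comb, wandering_cross; auto.
    + apply orthogonal_of_cross, wandering_cross; auto.
  - intros k _ n i. apply coef_S_orthogonal; auto; [apply HU_l2, Wl|].
    destruct (HU_onto (of_real (basis T2 (n, i)))) as [G [HG HGU]]; [exists 1; apply l2norm2_basis; auto|].
    assert (HSG : in_l2 T1 (dirichlet_shift T1 1 G))
      by (destruct HG as [l Hl]; exists l; apply l2norm2_dirichlet_shift; auto).
    rewrite basis_S, <- dirichlet_shift_of_real.
    replace (dirichlet_shift T2 1 (of_real (basis T2 (n, i)))) with (U (dirichlet_shift T1 1 G))
      by (extensionality u; rewrite HU_shift by auto; f_equal; extensionality x; apply HGU).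
    apply orthogonal_image; auto.
    + apply in_l2_comb, wandering_shift_cross; auto.
    + apply orthogonal_of_cross, wandering_shift_cross; auto.
Qed.

End Intertwiner.

(** * Cardinalities *)

Lemma exists_least (Q : nat -> Prop) : (exists n, Q n) -> exists x, Q x /\ forall y, Q y -> (x <= y)%nat.
Proof.
  intros H. destruct (dec_inh_nat_subset_has_unique_least_element Q (fun n => classic (Q n)) H) as [x [[H1 H2] _]].
  eauto.
Qed.

Lemma Listing_of_NoDup_bounded {A} (m : nat) : (forall l : list A, NoDup l -> (length l <= m)%nat) ->
  exists l : list A, Listing l.
Proof.
  intros H. enough (K : forall d (l : list A), NoDup l -> (m - length l <= d)%nat -> exists l0 : list A, Listing l0)
    by (apply (K m []); [constructor|cbn; lia]).
  induction d; intros l Hl Hd;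
    (destruct (classic (Full l)) as [c|c]; [exists l; split; auto|]);
    apply not_all_ex_not in c; destruct c as [x Hx]; assert (Hxl : NoDup (x :: l)) by (constructor; auto).
  - apply H in Hxl. apply H in Hl. cbn in Hxl. lia.
  - apply (IHd (x :: l)); auto. apply H in Hxl. cbn in *. lia.
Qed.

Lemma same_card_of_Listing {A B} (la : list A) (lb : list B) : Listing la -> Listing lb ->
  length la = length lb -> same_card A B.
Proof.
  intros [Ha Hca] [Hb Hcb] Hl. destruct lb as [|b0 lb'], la as [|a0 la']; try discriminate.
  - exists (fun a => False_rect _ (Hca a)), (fun b => False_rect _ (Hcb b)).
    split; intros x; [destruct (Hca x)|destruct (Hcb x)].
  - set (la := a0 :: la') in *. set (lb := b0 :: lb') in *.
    exists (fun a => nth (pos a la) lb b0), (fun b => nth (pos b lb) la a0). split.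
    + intros a. rewrite pos_nth; auto; [apply nth_pos; auto|]. rewrite <- Hl. apply pos_lt_length; auto.
    + intros b. rewrite pos_nth; auto; [apply nth_pos; auto|]. rewrite Hl. apply pos_lt_length; auto.
Qed.

Lemma same_card_sym {A B} : same_card A B -> same_card B A.
Proof. intros [f [g [H1 H2]]]. exists g, f. auto. Qed.

Lemma same_card_trans {A B C} : same_card A B -> same_card B C -> same_card A C.
Proof.
  intros [f [g [H1 H2]]] [f' [g' [H1' H2']]]. exists (fun a => f' (f a)), (fun c => g (g' c)).
  split; intros; [rewrite H1', H1|rewrite H2, H2']; auto.
Qed.

Lemma increasing_enum_of_unbounded (P : nat -> Prop) : (forall N, exists n, (N <= n)%nat /\ P n) ->
  exists s : nat -> nat, (forall n m, (n < m)%nat -> (s n < s m)%nat) /\ forall x, P x <-> exists n, s n = x.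
Proof.
  intros Unb.
  set (mu := fun (Q : nat -> Prop) => epsilon (inhabits O) (fun x => Q x /\ forall y, Q y -> (x <= y)%nat)).
  assert (Hmu : forall Q, (exists n, Q n) -> Q (mu Q) /\ forall y, Q y -> (mu Q <= y)%nat)
    by (intros Q HQ; apply epsilon_spec, exists_least, HQ).
  set (s := fix s (n : nat) : nat := match n with O => mu P | S k => mu (fun x => P x /\ (s k < x)%nat) end).
  assert (Hnext : forall n, P (s (S n)) /\ (s n < s (S n))%nat).
  { intros n. destruct (Unb (S (s n))) as [m [Hm1 Hm2]].
    apply (Hmu (fun x => P x /\ (s n < x)%nat)). exists m. split; auto; lia. }
  assert (HP : forall n, P (s n))
    by (intros [|n]; [apply Hmu; destruct (Unb O) as [k [_ Hk]]; eauto|apply Hnext]).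
  assert (Smono : forall n m, (n < m)%nat -> (s n < s m)%nat)
    by (intros n m Hnm; induction Hnm; [apply Hnext|pose proof (proj2 (Hnext m)); lia]).
  exists s. split; auto. intros x. split; [|intros [n <-]; apply HP].
  intros Px. assert (Sge : forall n, (n <= s n)%nat) by (induction n; [lia|pose proof (Smono n (S n)); lia]).
  destruct (exists_least (fun k => (x <= s k)%nat)) as [k [Hk1 Hk2]]; [exists x; apply Sge|].
  exists k. apply Nat.le_antisymm; auto. destruct k as [|k].
  - apply (proj2 (Hmu P (ex_intro _ x Px))); auto.
  - destruct (Nat.le_gt_cases x (s k)) as [h|h]; [specialize (Hk2 k h); lia|].
    apply (proj2 (Hmu (fun x => P x /\ (s k < x)%nat) (ex_intro _ x (conj Px h)))); auto.
Qed.

Lemma same_card_nat_of_injective {A} (code : A -> nat) : Injective code -> ~ Finite A -> same_card A nat.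
Proof.
  intros Hi Hinf. set (P := fun n => exists a, code a = n).
  assert (Unb : forall N, exists n, (N <= n)%nat /\ P n).
  { intros N. apply NNPP. intros Hc. apply Hinf.
    exists (flat_map (fun n => match excluded_middle_informative (P n) with
                               | left h => [proj1_sig (constructive_indefinite_description _ h)]
                               | right _ => [] end) (seq 0 N)).
    intros x. apply in_flat_map. exists (code x). split.
    - apply in_seq. split; [lia|]. destruct (Nat.lt_ge_cases (code x) N); auto.
      exfalso. apply Hc. exists (code x). split; auto. exists x; auto.
    - destruct (excluded_middle_informative (P (code x))) as [h|h]; [|exfalso; apply h; exists x; auto].
      destruct (constructive_indefinite_description _ h) as [y Hy]. left. apply Hi; auto. }
  destruct (increasing_enum_of_unbounded P Unb) as [s [Smono Srange]].
  assert (Sinj : forall n m, s n = s m -> n = m)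
    by (intros n m e; destruct (Nat.lt_trichotomy n m) as [h|[h|h]]; auto; apply Smono in h; lia).
  destruct (Unb O) as [_ [_ [a0 _]]].
  set (to := fun a => epsilon (inhabits O) (fun n => s n = code a)).
  set (from := fun n => epsilon (inhabits a0) (fun a => code a = s n)).
  assert (Hto : forall a, s (to a) = code a) by (intros a; apply epsilon_spec, Srange; exists a; auto).
  assert (Hfrom : forall n, code (from n) = s n) by (intros n; apply epsilon_spec, Srange; exists n; auto).
  exists to, from. split.
  - intros a. apply Hi. rewrite Hfrom, Hto. auto.
  - intros n. apply Sinj. rewrite Hto, Hfrom. auto.
Qed.

Definition vertex_index (T : rtree) (v : V T) : nat := epsilon (inhabits O) (fun n => enum T n = v).

Lemma enum_vertex_index T v : enum T (vertex_index T v) = v.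
Proof. unfold vertex_index. apply epsilon_spec, enum_surj. Qed.

Definition excess_code (T : rtree) (e : excess T) : nat :=
  vertex_index T (nth (S (excess_index e)) (children T (excess_vertex e)) (root T)).

Lemma excess_code_injective T (Hlf : locally_finite T) : Injective (excess_code T).
Proof.
  intros e e' H. apply (f_equal (enum T)) in H. unfold excess_code in H. rewrite !enum_vertex_index in H.
  pose proof (excess_index_bound e) as B1. pose proof (excess_index_bound e') as B2.
  rewrite card_Chi_children in B1, B2.
  assert (I1 : In (nth (S (excess_index e)) (children T (excess_vertex e)) (root T)) (children T (excess_vertex e)))
    by (apply nth_In; lia).
  assert (I2 : In (nth (S (excess_index e')) (children T (excess_vertex e')) (root T)) (children T (excess_vertex e')))
    by (apply nth_In; lia).
  rewrite H in I1. apply In_children in I1, I2; auto. rewrite I1 in I2. injection I2 as Ev.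
  apply excess_eq; auto. rewrite Ev in H.
  apply (proj1 (NoDup_nth (children T (excess_vertex e')) (root T)) (children_NoDup T Hlf _)) in H;
    [lia | rewrite <- Ev |]; lia.
Qed.

Lemma Listing_of_Full {A} (l : list A) : Full l -> Listing (nodup eq_dec_classic l).
Proof. intros H. split; [apply NoDup_nodup|intros x; apply nodup_In, H]. Qed.

Theorem mainTheorem2 (T1 T2 : rtree) :
  locally_finite T1 -> leafless T1 ->
  locally_finite T2 -> leafless T2 ->
  (unitarily_equivalent T1 T2 (dirichlet_shift T1 1) (dirichlet_shift T2 1)
   <-> same_card (excess T1) (excess T2)).
Proof.
  intros Hlf1 Hll1 Hlf2 Hll2. split; [|apply unitarily_equivalent_of_same_card; auto].
  intros [U [HI [HL [HN [HS HC]]]]].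
  pose proof (excess_target_length_le T1 T2 Hlf1 Hll1 Hlf2 Hll2 U HL HN HS HC) as Htgt.
  pose proof (excess_source_length_le T1 T2 Hlf1 Hll1 Hlf2 Hll2 U HI HL HN HS HC) as Hsrc.
  destruct (classic (Finite (excess T1))) as [[l1 Hl1]|Hinf1].
  - pose proof (Listing_of_Full l1 Hl1) as Hls1. set (ls1 := nodup eq_dec_classic l1) in *.
    destruct (Listing_of_NoDup_bounded (length ls1) (Htgt ls1 Hls1)) as [ls2 Hls2].
    apply (same_card_of_Listing ls1 ls2); auto.
    apply Nat.le_antisymm; [apply Hsrc; [exact Hls2|apply Hls1]|apply Htgt; [exact Hls1|apply Hls2]].
  - assert (Hinf2 : ~ Finite (excess T2)).
    { intros [l2 Hl2]. apply Hinf1. destruct (Listing_of_NoDup_bounded _ (Hsrc _ (Listing_of_Full l2 Hl2))) as [l Hl].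
      exists l. apply Hl. }
    apply (same_card_trans (B := nat)); [|apply same_card_sym].
    + apply (same_card_nat_of_injective (excess_code T1)); auto using excess_code_injective.
    + apply (same_card_nat_of_injective (excess_code T2)); auto using excess_code_injective.
Qed.
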